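(* Let $\mathbb{T}^2=[-\pi,\pi]^2$, let $f_0,g_0$ be smooth $2\pi$-periodic functions, not both identically zero, and set $\rho_0(x,y)=f_0(y)\sin x+g_0(y)\cos x$. Let \[ A:=\frac{1}{2\pi}\int_{-\pi}^{\pi}\cos(\sin x)\,dx,\qquad k_0=\left\lceil\frac{36}{1-|A|}\cdot\frac{\|\rho_0\|_{H^1}}{\|\rho_0\|_{H^{-1}}}\right\rceil,\qquad U(y)=\sin(k_0y), \] and let $\rho$ solve $\partial_t\rho+U(y)\partial_x\rho=0$, $\rho(0,\cdot)=\rho_0$. Then for all $t\in[0,1]$, $\|\rho(t,\cdot)\|_{H^{-1}}\le 2\|\rho(0,\cdot)\|_{H^{-1}}$, and \[ \|\rho(1,\cdot)\|_{H^{-1}}\le\frac{2|A|+1}{3}\|\rho(0,\cdot)\|_{H^{-1}}. \] Consequently there exists $t_0\in(0,1)$ with $\|\rho(t_0,\cdot)\|_{H^{-1}}=\frac{|A|+2}{3}\|\rho(0,\cdot)\|_{H^{-1}}$.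
   Context: $\lceil\cdot\rceil$ is the ceiling function. $\|F\|_{H^1}^2=\int_{\mathbb{T}^2}(F^2+|\nabla F|^2)$; for mean-zero $F$, $\|F\|_{H^{-1}}^2=\sum_{\xi\in\mathbb{Z}^2\setminus\{0\}}|\xi|^{-2}|\hat F(\xi)|^2$ (with the Fourier normalization for which Plancherel gives $\|F\|_{L^2}^2=\sum|\hat F(\xi)|^2$). *)

From Stdlib Require Import Reals ZArith Lra.
From Coquelicot Require Export Coquelicot.
Open Scope R_scope.

(* ceiling of a real number: Int_part is the floor *)
Definition ceilZ (x : R) : Z := (- Int_part (- x))%Z.

(* Functions on T^2 = [-pi,pi]^2 are represented as F : R -> R -> R, F x y. *)

Definition integral_T2 (F : R -> R -> R) : R :=
  RInt (fun y => RInt (fun x => F x y) (- PI) PI) (- PI) PI.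

Definition H1norm (F : R -> R -> R) : R :=
  sqrt (integral_T2 (fun x y =>
     (F x y) ^ 2 + (Derive (fun z => F z y) x) ^ 2
                 + (Derive (fun z => F x z) y) ^ 2)).

(* Fourier coefficient hat F(m,n) = (1/(2 pi)) int_{T^2} F(x,y) e^{-i(mx+ny)},
   so that Plancherel reads ||F||_{L^2}^2 = sum |hat F|^2.
   Its squared modulus, for real-valued F: *)
Definition fourier_sq (F : R -> R -> R) (m n : Z) : R :=
  (/ (2 * PI) * integral_T2 (fun x y => F x y * cos (IZR m * x + IZR n * y))) ^ 2
+ (/ (2 * PI) * integral_T2 (fun x y => F x y * sin (IZR m * x + IZR n * y))) ^ 2.

Definition Hm1_term (F : R -> R -> R) (m n : Z) : R :=
  if (Z.eqb m 0 && Z.eqb n 0)%bool then 0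
  else / (IZR m ^ 2 + IZR n ^ 2) * fourier_sq F m n.

Definition Hm1_box (F : R -> R -> R) (N : nat) : R :=
  sum_n (fun i => sum_n (fun j =>
     Hm1_term F (Z.of_nat i - Z.of_nat N)%Z (Z.of_nat j - Z.of_nat N)%Z)
   (2 * N)) (2 * N).

(* ||F||_{H^{-1}}^2 = sum_{xi in Z^2 \ {0}} |xi|^{-2} |hat F(xi)|^2
   (nonnegative terms; value in the extended reals, possibly +oo) *)
Definition Hm1sq (F : R -> R -> R) : Rbar := Lim_seq (Hm1_box F).

Definition Hm1norm (F : R -> R -> R) : Rbar :=
  match Hm1sq F with
  | Finite r => Finite (sqrt r)
  | p_infty => p_infty
  | m_infty => m_infty
  end.

Definition smooth (f : R -> R) : Prop := forall (k : nat) (x : R), ex_derive_n f k x.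
Definition periodic2pi (f : R -> R) : Prop := forall x, f (x + 2 * PI) = f x.

(* Write rho0 = Re (Z(y) e^{ix}) with Z = g0 - i f0.  Along the characteristics of the shear
   U(y) = sin (k0 y) the solution is rho(t) = Re (Z(y) e^{-i phi_t(y)} e^{ix}), phi_t = t U.
   For such first x-modes the H^{-1} norm is a weighted l^2 norm of the Fourier coefficients of
   Z in y: a seminorm, bounded by the L^2 norm (Bessel), and bounded for Z = u' - w by the L^2
   norms of u and w, the weight 1 / (1 + n^2) absorbing the derivative.  Splitting
   e^{-i phi_t} = a(t) + G_t', with a(t) its mean and G_t a primitive vanishing at +-PI, of size
   O(1/k0) because phi_t is 2 PI / k0 periodic, gives
     ||rho(t)||_{H^-1} <= |a(t)| ||rho0||_{H^-1} + (12 / k0) ||rho0||_{H^1},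
   and a(1) = A lies in [0, 1).  The choice of k0 makes the error at most
   (1 - A) / 3 ||rho0||_{H^-1}, which gives both bounds; t |-> ||rho(t)||_{H^-1} is Lipschitz,
   and the intermediate value theorem gives t0. *)

From Stdlib Require Import Reals ZArith Lra Lia FunctionalExtensionality.
From Coquelicot Require Import Coquelicot.
Open Scope R_scope.

Definition continuous_R (f : R -> R) : Prop := forall x, continuous f x.

Lemma ex_derive_continuous_R f : (forall x, ex_derive f x) -> continuous_R f.
Proof. intros H x; apply (ex_derive_continuous (K:=R_AbsRing) (V:=R_NormedModule)); auto. Qed.

Lemma continuous_R_plus f g :
  continuous_R f -> continuous_R g -> continuous_R (fun x => f x + g x).
Proof. intros Hf Hg x; apply (continuous_plus f g); auto. Qed.

Lemma continuous_R_minus f g :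
  continuous_R f -> continuous_R g -> continuous_R (fun x => f x - g x).
Proof. intros Hf Hg x; apply (continuous_minus f g); auto. Qed.

Lemma continuous_R_mult f g :
  continuous_R f -> continuous_R g -> continuous_R (fun x => f x * g x).
Proof. intros Hf Hg x; apply (continuous_mult f g); auto. Qed.

Lemma continuous_R_opp f : continuous_R f -> continuous_R (fun x => - f x).
Proof. intros Hf x; apply (continuous_opp f); auto. Qed.

Lemma continuous_R_const c : continuous_R (fun _ => c).
Proof. intros x; apply continuous_const. Qed.

Lemma continuous_R_id : continuous_R (fun x => x).
Proof. intros x; apply continuous_id. Qed.

Lemma continuous_R_pow f n : continuous_R f -> continuous_R (fun x => f x ^ n).
Proof.
  intros Hf; induction n; simpl.
  - apply continuous_R_const.
  - apply continuous_R_mult; auto.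
Qed.

Lemma continuous_R_sin f : continuous_R f -> continuous_R (fun x => sin (f x)).
Proof.
  intros Hf x; apply (continuous_comp f sin); auto.
  apply (ex_derive_continuous (K:=R_AbsRing) (V:=R_NormedModule)); auto_derive; auto.
Qed.

Lemma continuous_R_cos f : continuous_R f -> continuous_R (fun x => cos (f x)).
Proof.
  intros Hf x; apply (continuous_comp f cos); auto.
  apply (ex_derive_continuous (K:=R_AbsRing) (V:=R_NormedModule)); auto_derive; auto.
Qed.

Lemma continuous_R_comp f g : continuous_R f -> continuous_R g -> continuous_R (fun x => g (f x)).
Proof. intros Hf Hg x; apply (continuous_comp f g); auto. Qed.

Ltac continuous_R_tac :=
  repeat match goal with
  | |- continuous_R (fun _ => _ + _) => apply continuous_R_plus
  | |- continuous_R (fun _ => _ - _) => apply continuous_R_minus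
  | |- continuous_R (fun _ => _ * _) => apply continuous_R_mult
  | |- continuous_R (fun _ => - _) => apply continuous_R_opp
  | |- continuous_R (fun _ => sin _) => apply continuous_R_sin
  | |- continuous_R (fun _ => cos _) => apply continuous_R_cos
  | |- continuous_R (fun _ => _ ^ _) => apply continuous_R_pow
  | |- continuous_R (fun x => x) => apply continuous_R_id
  | |- continuous_R sin => apply (continuous_R_sin (fun x => x) continuous_R_id)
  | |- continuous_R cos => apply (continuous_R_cos (fun x => x) continuous_R_id)
  | |- continuous_R (Rmult ?c) => apply (continuous_R_mult (fun _ => c) (fun x => x))
  | |- continuous_R (fun _ => ?c) => apply continuous_R_const
  | |- continuous_R _ => assumption
  end.

Definition is_C1 (f : R -> R) : Prop := (forall x, ex_derive f x) /\ continuous_R (Derive f).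

Lemma smooth_is_C1 f : smooth f -> is_C1 f.
Proof.
  intros H; split.
  - intros x; apply (H 1%nat x).
  - apply ex_derive_continuous_R; intros x; apply (H 2%nat x).
Qed.

Lemma is_C1_continuous f : is_C1 f -> continuous_R f.
Proof. intros [Hd _]; apply ex_derive_continuous_R, Hd. Qed.

Lemma is_C1_opp f : is_C1 f -> is_C1 (fun x => - f x).
Proof.
  intros [Hd Hc]; split.
  - intros x; apply (ex_derive_opp (K:=R_AbsRing) (V:=R_NormedModule)), Hd.
  - rewrite (functional_extensionality (Derive (fun x => - f x)) (fun x => - Derive f x))
      by (intros; apply Derive_opp).
    continuous_R_tac.
Qed.

(* Real-valued instances of Coquelicot's integral lemmas: used generically, [RInt f a b] lives in
   an abstract normed module where [ring] and [lra] fail, hence also the [:> R] annotations. *)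
Lemma ex_RInt_continuous_R f a b : continuous_R f -> ex_RInt f a b.
Proof. intros H; apply (ex_RInt_continuous (V:=R_CompleteNormedModule)); intros; apply H. Qed.

Lemma is_RInt_RInt_R f a b : continuous_R f -> is_RInt f a b (RInt f a b).
Proof. intros H; apply (RInt_correct (V:=R_CompleteNormedModule)), ex_RInt_continuous_R, H. Qed.

Lemma is_RInt_value (f : R -> R) a b (l l' : R) : is_RInt f a b l -> l = l' -> is_RInt f a b l'.
Proof. intros H ->; auto. Qed.

Lemma is_RInt_ext_R (f g : R -> R) a b l :
  (forall x, Rmin a b < x < Rmax a b -> f x = g x) -> is_RInt f a b l -> is_RInt g a b l.
Proof. apply (is_RInt_ext (V:=R_NormedModule)). Qed.

Lemma is_RInt_plus_R (f g : R -> R) a b If Ig :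
  is_RInt f a b If -> is_RInt g a b Ig -> is_RInt (fun x => f x + g x) a b (If + Ig).
Proof. apply (is_RInt_plus (V:=R_NormedModule)). Qed.

Lemma is_RInt_scal_R (f : R -> R) a b c If :
  is_RInt f a b If -> is_RInt (fun x => c * f x) a b (c * If).
Proof. apply (is_RInt_scal (V:=R_NormedModule)). Qed.

Lemma is_RInt_const_R c : is_RInt (fun _ => c) (- PI) PI (2 * PI * c).
Proof.
  eapply is_RInt_value; [apply (is_RInt_const (V:=R_NormedModule))|].
  unfold scal; simpl; unfold mult; simpl; ring.
Qed.

Lemma is_RInt_sum (f : nat -> R -> R) (v : nat -> R) a b M :
  (forall j, is_RInt (f j) a b (v j)) ->
  is_RInt (fun x => sum_n (fun j => f j x) M) a b (sum_n v M).
Proof.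
  intros H; induction M.
  - rewrite sum_O; eapply is_RInt_ext; [|apply (H O)]; intros; rewrite sum_O; auto.
  - rewrite sum_Sn; eapply is_RInt_ext; [|apply (is_RInt_plus _ _ _ _ _ _ IHM (H (S M)))].
    intros; rewrite sum_Sn; auto.
Qed.

Lemma is_RInt_nonneg (f : R -> R) l : is_RInt f (- PI) PI l -> (forall x, 0 <= f x) -> 0 <= l.
Proof.
  intros H Hf; rewrite <- (is_RInt_unique f _ _ _ H).
  apply RInt_ge_0; [pose proof PI_RGT_0; lra | exists l; auto | intros; auto].
Qed.

Lemma RInt_ext_R (f g : R -> R) a b : (forall x, f x = g x) -> RInt f a b = RInt g a b :> R.
Proof. intros H; apply (RInt_ext (V:=R_CompleteNormedModule)); intros; apply H. Qed.

Lemma RInt_const_R c a b : RInt (fun _ => c) a b = (b - a) * c :> R.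
Proof. rewrite (RInt_const (V:=R_CompleteNormedModule)); reflexivity. Qed.

Lemma RInt_scal_R (f : R -> R) a b c :
  continuous_R f -> RInt (fun x => c * f x) a b = c * RInt f a b :> R.
Proof. intros H; apply is_RInt_unique, is_RInt_scal_R, is_RInt_RInt_R, H. Qed.

Lemma RInt_lin (f g : R -> R) a b c d : continuous_R f -> continuous_R g ->
  RInt (fun x => c * f x + d * g x) a b = c * RInt f a b + d * RInt g a b :> R.
Proof.
  intros Hf Hg; apply is_RInt_unique.
  apply is_RInt_plus_R; apply is_RInt_scal_R, is_RInt_RInt_R; auto.
Qed.

Lemma RInt_Chasles_R (f : R -> R) a b c : continuous_R f -> RInt f a b + RInt f b c = RInt f a c.
Proof.
  intros H; apply (RInt_Chasles (V:=R_CompleteNormedModule)); apply ex_RInt_continuous_R, H.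
Qed.

Lemma RInt_swap_R (f : R -> R) a b : continuous_R f -> RInt f b a = - RInt f a b :> R.
Proof.
  intros H; rewrite <- (opp_RInt_swap (V:=R_CompleteNormedModule)); [reflexivity|].
  apply ex_RInt_continuous_R, H.
Qed.

Lemma RInt_comp_lin_R (f : R -> R) u v a b : continuous_R f ->
  RInt (fun y => u * f (u * y + v)) a b = RInt f (u * a + v) (u * b + v) :> R.
Proof.
  intros H; rewrite <- (RInt_comp_lin (V:=R_CompleteNormedModule)); [reflexivity|].
  apply ex_RInt_continuous_R, H.
Qed.

Lemma RInt_odd (f : R -> R) :
  continuous_R f -> (forall y, f (- y) = - f y) -> RInt f (- PI) PI = 0 :> R.
Proof.
  intros H Hodd; pose proof (RInt_comp_lin_R f (-1) 0 (- PI) PI H) as E.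
  replace (-1 * - PI + 0) with PI in E by ring; replace (-1 * PI + 0) with (- PI) in E by ring.
  rewrite (RInt_swap_R f (- PI) PI H), (RInt_ext_R _ f) in E; [lra|].
  intros y; replace (-1 * y + 0) with (- y) by ring; rewrite Hodd; ring.
Qed.

Section Periodic.
Variables (f : R -> R) (L : R).
Hypothesis Hf : continuous_R f.
Hypothesis Hper : forall y, f (y + L) = f y.

Lemma RInt_period_shift x c : RInt f x (x + L) = RInt f c (c + L) :> R.
Proof.
  assert (Hsh : RInt f (c + L) (x + L) = RInt f c x).
  { rewrite <- (Rmult_1_l c) at 1; rewrite <- (Rmult_1_l x) at 1.
    rewrite <- RInt_comp_lin_R by auto; apply RInt_ext_R.
    intros y; rewrite !Rmult_1_l, Hper; reflexivity. }
  rewrite <- (RInt_Chasles_R f x c (x + L)), <- (RInt_Chasles_R f c (c + L) (x + L)), Hsh,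
    (RInt_swap_R f x c) by auto.
  ring.
Qed.

Lemma RInt_periods c (k : nat) : RInt f c (c + INR k * L) = INR k * RInt f c (c + L) :> R.
Proof.
  induction k.
  - simpl; rewrite Rmult_0_l, Rplus_0_r, RInt_point; unfold zero; simpl; ring.
  - rewrite S_INR, <- (RInt_Chasles_R f c (c + INR k * L)), IHk by auto.
    replace (c + (INR k + 1) * L) with (c + INR k * L + L) by ring.
    rewrite (RInt_period_shift (c + INR k * L) c); ring.
Qed.

End Periodic.

Lemma RInt_comp_mul_periodic (g : R -> R) (k : nat) :
  continuous_R g -> (forall x, g (x + 2 * PI) = g x) -> (1 <= k)%nat ->
  RInt (fun y => g (INR k * y)) (- PI) PI = RInt g (- PI) PI :> R.
Proof.
  intros Hg Hper Hk; assert (HK : 0 < INR k) by (apply lt_0_INR; lia).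
  pose proof (RInt_comp_lin_R g (INR k) 0 (- PI) PI Hg) as E.
  rewrite RInt_scal_R in E
    by (apply (continuous_R_comp (fun y => INR k * y + 0)); continuous_R_tac).
  replace (INR k * - PI + 0) with (- (INR k * PI)) in E by ring.
  replace (INR k * PI + 0) with (- (INR k * PI) + INR k * (2 * PI)) in E by ring.
  rewrite RInt_periods, (RInt_period_shift g _ Hg Hper _ (- PI)) in E by auto.
  replace (- PI + 2 * PI) with PI in E by ring.
  rewrite (RInt_ext_R (fun y => g (INR k * y + 0)) (fun y => g (INR k * y))) in E
    by (intros; rewrite Rplus_0_r; reflexivity).
  apply Rmult_eq_reg_l with (INR k); [exact E | lra].
Qed.

(* Split [a, y] at the last point a + j L of the lattice on which the primitive vanishes. *)
Lemma RInt_periodic_mean_zero_bound (r : R -> R) (a L M : R) :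
  continuous_R r -> 0 < L -> (forall y, r (y + L) = r y) -> RInt r a (a + L) = 0 ->
  (forall y, Rabs (r y) <= M) -> forall y, a <= y -> Rabs (RInt r a y) <= M * L / 2.
Proof.
  intros Hr HL Hper H0 HM y Hy.
  assert (HM0 : 0 <= M) by (specialize (HM 0); pose proof (Rabs_pos (r 0)); lra).
  assert (Hlat : forall j : nat, RInt r a (a + INR j * L) = 0 :> R)
    by (intros j; rewrite RInt_periods, H0 by auto; ring).
  set (x := (y - a) / L); destruct (base_Int_part x) as [B1 B2].
  assert (Hx : 0 <= x) by (apply Rmult_le_pos; [lra | apply Rlt_le, Rinv_0_lt_compat; lra]).
  assert (Hz : (0 <= Int_part x)%Z) by (assert (-1 < Int_part x)%Z by (apply lt_IZR; lra); lia).
  set (j := Z.to_nat (Int_part x)).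
  assert (Ej : INR j = IZR (Int_part x)) by (unfold j; rewrite INR_IZR_INZ, Z2Nat.id; auto).
  assert (HxL : x * L = y - a) by (unfold x; field; lra).
  set (y0 := a + INR j * L).
  assert (Hy0 : y0 <= y <= y0 + L).
  { unfold y0; rewrite Ej.
    assert (IZR (Int_part x) * L <= x * L) by (apply Rmult_le_compat_r; lra).
    assert ((x - 1) * L <= IZR (Int_part x) * L) by (apply Rmult_le_compat_r; lra).
    lra. }
  assert (A1 : Rabs (RInt r y0 y) <= (y - y0) * M)
    by (apply abs_RInt_le_const; auto; [lra | apply ex_RInt_continuous_R, Hr]).
  assert (A2 : Rabs (RInt r y (y0 + L)) <= (y0 + L - y) * M)
    by (apply abs_RInt_le_const; auto; [lra | apply ex_RInt_continuous_R, Hr]).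
  assert (E1 : RInt r a y = RInt r y0 y :> R).
  { rewrite <- (RInt_Chasles_R r a y0 y Hr); unfold y0; rewrite Hlat; ring. }
  assert (E2 : RInt r a y = - RInt r y (y0 + L) :> R).
  { pose proof (RInt_Chasles_R r a y (y0 + L) Hr) as E.
    replace (y0 + L) with (a + INR (S j) * L) in E |- * by (unfold y0; rewrite S_INR; ring).
    rewrite Hlat in E; lra. }
  destruct (Rle_or_lt (y - y0) (L / 2)).
  - rewrite E1; apply Rle_trans with ((y - y0) * M); [auto | nra].
  - rewrite E2, Rabs_Ropp; apply Rle_trans with ((y0 + L - y) * M); [auto | nra].
Qed.

Lemma RInt_one_period_zero (r : R -> R) (k : nat) : (1 <= k)%nat -> continuous_R r ->
  (forall y, r (y + 2 * PI / INR k) = r y) -> RInt r (- PI) PI = 0 ->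
  RInt r (- PI) (- PI + 2 * PI / INR k) = 0 :> R.
Proof.
  intros Hk Hr Hper H0; assert (HK : 0 < INR k) by (apply lt_0_INR; lia).
  pose proof (RInt_periods r (2 * PI / INR k) Hr Hper (- PI) k) as E.
  replace (- PI + INR k * (2 * PI / INR k)) with PI in E by (field; lra).
  rewrite H0 in E; symmetry in E; apply Rmult_integral in E; destruct E; [lra|auto].
Qed.

Lemma is_derive_RInt_upper (f : R -> R) a y :
  continuous_R f -> is_derive (fun y => RInt f a y) y (f y).
Proof.
  intros H; apply (is_derive_RInt (V:=R_CompleteNormedModule) f (fun y => RInt f a y) a);
    [|apply H].
  exists (mkposreal 1 Rlt_0_1); intros b _; apply is_RInt_RInt_R, H.
Qed.

Lemma is_derive_Rplus f g y df dg :
  is_derive f y df -> is_derive g y dg -> is_derive (fun x => f x + g x) y (df + dg).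
Proof. apply (is_derive_plus (K:=R_AbsRing) (V:=R_NormedModule)). Qed.

Lemma is_derive_Rminus f g y df dg :
  is_derive f y df -> is_derive g y dg -> is_derive (fun x => f x - g x) y (df - dg).
Proof. apply (is_derive_minus (K:=R_AbsRing) (V:=R_NormedModule)). Qed.

Lemma is_derive_Rmult f g y df dg :
  is_derive f y df -> is_derive g y dg -> is_derive (fun x => f x * g x) y (df * g y + f y * dg).
Proof.
  intros Hf Hg; apply (is_derive_mult (K:=R_AbsRing) f g y df dg Hf Hg); intros; apply Rmult_comm.
Qed.

Lemma ceilZ_ge x : x <= IZR (ceilZ x).
Proof. unfold ceilZ; rewrite opp_IZR; destruct (base_Int_part (- x)); lra. Qed.

Lemma ceilZ_0 : ceilZ 0 = 0%Z.
Proof. unfold ceilZ; rewrite Ropp_0, <- (Int_part_spec 0 0); [reflexivity | simpl; lra]. Qed.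

Lemma ceilZ_pos_nat x : 0 < x -> exists k : nat, (1 <= k)%nat /\ IZR (ceilZ x) = INR k.
Proof.
  intros Hx; pose proof (ceilZ_ge x).
  assert (Hpos : (0 < ceilZ x)%Z) by (apply lt_IZR; simpl; lra).
  exists (Z.to_nat (ceilZ x)); split; [lia|].
  rewrite INR_IZR_INZ, Z2Nat.id; [reflexivity | lia].
Qed.

Lemma IVT_interior (f : R -> R) a b y :
  a < b -> continuity f -> f b < y < f a -> exists c, a < c < b /\ f c = y.
Proof.
  intros Hab Hf Hy; destruct (IVT_gen f a b y Hf) as [c [Hc Ec]].
  - rewrite Rmin_right, Rmax_left by lra; lra.
  - rewrite Rmin_left, Rmax_right in Hc by lra.
    exists c; split; [|exact Ec].
    assert (c <> a) by (intros ->; lra); assert (c <> b) by (intros ->; lra); lra.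
Qed.

Lemma lipschitz_continuity (n : R -> R) (C : R) : 0 <= C ->
  (forall s t, Rabs (t - s) <= 1 -> Rabs (n t - n s) <= C * Rabs (t - s)) -> continuity n.
Proof.
  intros HC H s; unfold continuity_pt, continue_in, limit1_in, limit_in; intros eps Heps.
  exists (Rmin 1 (eps / (C + 1))); split.
  - apply Rmin_pos; [lra | apply Rdiv_lt_0_compat; lra].
  - intros t [_ Ht]; simpl in *; unfold R_dist in *.
    pose proof (Rmin_l 1 (eps / (C + 1))); pose proof (Rmin_r 1 (eps / (C + 1))).
    specialize (H s t ltac:(lra)); pose proof (Rabs_pos (t - s)).
    apply Rle_lt_trans with ((C + 1) * Rabs (t - s)); [nra|].
    replace eps with ((C + 1) * (eps / (C + 1))) by (field; lra).
    apply Rmult_lt_compat_l; lra.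
Qed.

Lemma sum_n_le (u v : nat -> R) n :
  (forall k, (k <= n)%nat -> u k <= v k) -> sum_n u n <= sum_n v n.
Proof.
  induction n; intros H.
  - rewrite !sum_O; apply H; lia.
  - rewrite !sum_Sn; apply Rplus_le_compat; [apply IHn; intros; apply H|apply H]; lia.
Qed.

Lemma sum_n_Rext (u v : nat -> R) n : (forall k, u k = v k) -> sum_n u n = sum_n v n.
Proof. apply sum_n_ext. Qed.

Lemma sum_n_Rext_loc (u v : nat -> R) n :
  (forall k, (k <= n)%nat -> u k = v k) -> sum_n u n = sum_n v n.
Proof. apply sum_n_ext_loc. Qed.

Lemma sum_n_Rplus (u v : nat -> R) n : sum_n (fun k => u k + v k) n = sum_n u n + sum_n v n.
Proof. apply (sum_n_plus u v n). Qed.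

Lemma sum_n_Rmult_l (a : R) (u : nat -> R) n : sum_n (fun k => a * u k) n = a * sum_n u n.
Proof. apply (sum_n_mult_l a u n). Qed.

Lemma sum_n_nonneg (u : nat -> R) n : (forall k, 0 <= u k) -> 0 <= sum_n u n.
Proof.
  intros H; apply Rle_trans with (sum_n (fun _ => 0) n).
  - rewrite sum_n_const; lra.
  - apply sum_n_le; auto.
Qed.

Lemma sum_n_shift (g : nat -> R) n : sum_n g (S n) = g O + sum_n (fun j => g (S j)) n.
Proof.
  induction n.
  - rewrite sum_Sn, !sum_O; reflexivity.
  - rewrite sum_Sn, IHn, (sum_Sn (fun j => g (S j))); unfold plus; simpl; ring.
Qed.

Lemma sum_n_indicator (k M : nat) (c : R) :
  sum_n (fun i => if Nat.eqb i k then c else 0) M = if Nat.leb k M then c else 0.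
Proof.
  induction M.
  - rewrite sum_O; destruct k; reflexivity.
  - rewrite sum_Sn, IHM.
    destruct (Nat.eqb_spec (S M) k), (Nat.leb_spec k M), (Nat.leb_spec k (S M)); try lia;
      unfold plus; simpl; ring.
Qed.

Lemma sum_n_two_terms (g : nat -> R) (p q M : nat) : (p < q)%nat -> (q <= M)%nat ->
  (forall i, i <> p -> i <> q -> g i = 0) -> sum_n g M = g p + g q.
Proof.
  intros Hpq HqM H.
  assert (Hg : forall i, g i = (if Nat.eqb i p then g p else 0) + (if Nat.eqb i q then g q else 0)).
  { intros i; destruct (Nat.eqb_spec i p), (Nat.eqb_spec i q); subst; try lia; try ring.
    rewrite H by auto; ring. }
  rewrite (sum_n_Rext _ _ _ Hg), sum_n_Rplus, !sum_n_indicator.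
  destruct (Nat.leb_spec p M), (Nat.leb_spec q M); try lia; reflexivity.
Qed.

Lemma sum_n_prod (a b : nat -> R) n m :
  sum_n a n * sum_n b m = sum_n (fun j => sum_n (fun k => a j * b k) m) n.
Proof.
  rewrite <- (sum_n_mult_r (K:=R_Ring)); apply sum_n_ext; intros j.
  symmetry; apply (sum_n_mult_l (K:=R_Ring)).
Qed.

(** * Fourier coefficients of first x-modes *)

Lemma sin_IZR_PI k : sin (IZR k * PI) = 0.
Proof. apply sin_eq_0_1; exists k; auto. Qed.

Definition int_cos (k : Z) (d : R) : R := if Z.eqb k 0 then 2 * PI * cos d else 0.
Definition int_sin (k : Z) (d : R) : R := if Z.eqb k 0 then 2 * PI * sin d else 0.

Lemma is_RInt_cos_lin k d : is_RInt (fun x => cos (IZR k * x + d)) (- PI) PI (int_cos k d).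
Proof.
  unfold int_cos; destruct (Z.eqb_spec k 0) as [->|Hk].
  - eapply is_RInt_ext_R; [|apply is_RInt_const_R]; intros; simpl; f_equal; ring.
  - apply not_0_IZR in Hk.
    eapply is_RInt_value.
    + apply (is_RInt_derive (V:=R_CompleteNormedModule) (fun x => sin (IZR k * x + d) / IZR k)).
      * intros; auto_derive; auto; field; auto.
      * intros; apply continuous_R_cos; continuous_R_tac.
    + unfold minus, plus, opp; simpl.
      rewrite !sin_plus; replace (IZR k * - PI) with (- (IZR k * PI)) by ring.
      rewrite sin_neg, cos_neg, sin_IZR_PI; field; auto.
Qed.

Lemma is_RInt_sin_lin k d : is_RInt (fun x => sin (IZR k * x + d)) (- PI) PI (int_sin k d).
Proof.
  unfold int_sin; destruct (Z.eqb_spec k 0) as [->|Hk].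
  - eapply is_RInt_ext_R; [|apply is_RInt_const_R]; intros; simpl; f_equal; ring.
  - apply not_0_IZR in Hk.
    eapply is_RInt_value.
    + apply (is_RInt_derive (V:=R_CompleteNormedModule) (fun x => - cos (IZR k * x + d) / IZR k)).
      * intros; auto_derive; auto; field; auto.
      * intros; apply continuous_R_sin; continuous_R_tac.
    + unfold minus, plus, opp; simpl.
      rewrite !cos_plus; replace (IZR k * - PI) with (- (IZR k * PI)) by ring.
      rewrite sin_neg, cos_neg, sin_IZR_PI; field; auto.
Qed.

Lemma is_RInt_trig_comb a1 a2 a3 a4 k1 k2 d1 d2 :
  is_RInt (fun x => a1 * sin (IZR k1 * x + d1) + a2 * sin (IZR k2 * x + d2)
                  + a3 * cos (IZR k1 * x + d1) + a4 * cos (IZR k2 * x + d2)) (- PI) PI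
     (a1 * int_sin k1 d1 + a2 * int_sin k2 d2 + a3 * int_cos k1 d1 + a4 * int_cos k2 d2).
Proof.
  apply is_RInt_plus_R; [apply is_RInt_plus_R; [apply is_RInt_plus_R|]|]; apply is_RInt_scal_R;
    lazymatch goal with
    | |- is_RInt (fun x => sin _) _ _ _ => apply is_RInt_sin_lin
    | |- is_RInt (fun x => cos _) _ _ _ => apply is_RInt_cos_lin
    end.
Qed.

(* [first_mode z1 z2 x y] is the real part of (z1 + i z2)(y) e^{ix}. *)
Definition first_mode (z1 z2 : R -> R) (x y : R) : R := z1 y * cos x - z2 y * sin x.

Definition inner_cos (m : Z) (a b c : R) : R :=
  a / 2 * (int_cos (1 + m) c + int_cos (1 - m) (- c))
  - b / 2 * (int_sin (1 + m) c + int_sin (1 - m) (- c)).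
Definition inner_sin (m : Z) (a b c : R) : R :=
  a / 2 * (int_sin (1 + m) c - int_sin (1 - m) (- c))
  + b / 2 * (int_cos (1 + m) c - int_cos (1 - m) (- c)).

Lemma RInt_first_mode_cos m a b c :
  RInt (fun x => (a * cos x - b * sin x) * cos (IZR m * x + c)) (- PI) PI = inner_cos m a b c :> R.
Proof.
  apply is_RInt_unique; eapply is_RInt_value.
  - eapply is_RInt_ext_R; [|apply (is_RInt_trig_comb (- (b / 2)) (- (b / 2)) (a / 2) (a / 2)
                                     (1 + m) (1 - m) c (- c))].
    intros x _; rewrite plus_IZR, minus_IZR.
    replace ((1 + IZR m) * x + c) with (x + (IZR m * x + c)) by ring.
    replace ((1 - IZR m) * x + - c) with (x - (IZR m * x + c)) by ring.
    set (u := IZR m * x + c); rewrite sin_plus, sin_minus, cos_plus, cos_minus; field.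
  - unfold inner_cos; ring.
Qed.

Lemma RInt_first_mode_sin m a b c :
  RInt (fun x => (a * cos x - b * sin x) * sin (IZR m * x + c)) (- PI) PI = inner_sin m a b c :> R.
Proof.
  apply is_RInt_unique; eapply is_RInt_value.
  - eapply is_RInt_ext_R; [|apply (is_RInt_trig_comb (a / 2) (- (a / 2)) (b / 2) (- (b / 2))
                                     (1 + m) (1 - m) c (- c))].
    intros x _; rewrite plus_IZR, minus_IZR.
    replace ((1 + IZR m) * x + c) with (x + (IZR m * x + c)) by ring.
    replace ((1 - IZR m) * x + - c) with (x - (IZR m * x + c)) by ring.
    set (u := IZR m * x + c); rewrite sin_plus, sin_minus, cos_plus, cos_minus; field.
  - unfold inner_sin; ring.
Qed.

(* [coef_re nu z1 z2 + i coef_im nu z1 z2] is the integral of (z1 + i z2)(y) e^{-i nu y}. *)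
Definition coef_re (nu : R) (z1 z2 : R -> R) : R :=
  RInt (fun y => z1 y * cos (nu * y) + z2 y * sin (nu * y)) (- PI) PI.
Definition coef_im (nu : R) (z1 z2 : R -> R) : R :=
  RInt (fun y => z2 y * cos (nu * y) - z1 y * sin (nu * y)) (- PI) PI.
Definition coef_sq (nu : R) (z1 z2 : R -> R) : R := coef_re nu z1 z2 ^ 2 + coef_im nu z1 z2 ^ 2.

Lemma coef_sq_nonneg nu z1 z2 : 0 <= coef_sq nu z1 z2.
Proof. unfold coef_sq; nra. Qed.

Section FirstModeFourier.
Variables z1 z2 : R -> R.
Hypothesis Hz1 : continuous_R z1.
Hypothesis Hz2 : continuous_R z2.

Lemma integral_T2_first_mode_cos m n :
  integral_T2 (fun x y => first_mode z1 z2 x y * cos (IZR m * x + IZR n * y))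
  = RInt (fun y => inner_cos m (z1 y) (z2 y) (IZR n * y)) (- PI) PI.
Proof. apply RInt_ext_R; intros y; apply RInt_first_mode_cos. Qed.

Lemma integral_T2_first_mode_sin m n :
  integral_T2 (fun x y => first_mode z1 z2 x y * sin (IZR m * x + IZR n * y))
  = RInt (fun y => inner_sin m (z1 y) (z2 y) (IZR n * y)) (- PI) PI.
Proof. apply RInt_ext_R; intros y; apply RInt_first_mode_sin. Qed.

Lemma fourier_sq_first_mode_other m n :
  m <> 1%Z -> m <> (-1)%Z -> fourier_sq (first_mode z1 z2) m n = 0.
Proof.
  intros H1 H2; unfold fourier_sq.
  rewrite integral_T2_first_mode_cos, integral_T2_first_mode_sin.
  assert (E1 : Z.eqb (1 + m) 0 = false) by (apply Z.eqb_neq; lia).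
  assert (E2 : Z.eqb (1 - m) 0 = false) by (apply Z.eqb_neq; lia).
  rewrite (RInt_ext_R _ (fun _ => 0)), (RInt_ext_R (fun y => inner_sin _ _ _ _) (fun _ => 0)),
    RInt_const_R; [ring| |];
    intros y; unfold inner_cos, inner_sin, int_sin, int_cos; rewrite E1, E2; ring.
Qed.

Lemma fourier_sq_first_mode_1 n :
  fourier_sq (first_mode z1 z2) 1 n = coef_sq (IZR n) z1 z2 / 4.
Proof.
  unfold fourier_sq, coef_sq, coef_re, coef_im.
  rewrite integral_T2_first_mode_cos, integral_T2_first_mode_sin.
  rewrite (RInt_ext_R (fun y => inner_cos _ _ _ _)
             (fun y => PI * (z1 y * cos (IZR n * y) + z2 y * sin (IZR n * y)))),
    (RInt_ext_R (fun y => inner_sin _ _ _ _)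
             (fun y => - PI * (z2 y * cos (IZR n * y) - z1 y * sin (IZR n * y)))).
  - rewrite !RInt_scal_R by continuous_R_tac; field; apply PI_neq0.
  - intros y; unfold inner_sin, int_sin, int_cos; simpl; rewrite sin_neg, cos_neg; field.
  - intros y; unfold inner_cos, int_sin, int_cos; simpl; rewrite sin_neg, cos_neg; field.
Qed.

Lemma fourier_sq_first_mode_m1 n :
  fourier_sq (first_mode z1 z2) (-1) n = coef_sq (- IZR n) z1 z2 / 4.
Proof.
  unfold fourier_sq, coef_sq, coef_re, coef_im.
  rewrite integral_T2_first_mode_cos, integral_T2_first_mode_sin.
  rewrite (RInt_ext_R (fun y => inner_cos _ _ _ _)
             (fun y => PI * (z1 y * cos (- IZR n * y) + z2 y * sin (- IZR n * y)))),
    (RInt_ext_R (fun y => inner_sin _ _ _ _)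
             (fun y => PI * (z2 y * cos (- IZR n * y) - z1 y * sin (- IZR n * y)))).
  - rewrite !RInt_scal_R by continuous_R_tac; field; apply PI_neq0.
  - intros y; unfold inner_sin, int_sin, int_cos; simpl.
    rewrite Ropp_mult_distr_l_reverse, sin_neg, cos_neg; field.
  - intros y; unfold inner_cos, int_sin, int_cos; simpl.
    rewrite Ropp_mult_distr_l_reverse, sin_neg, cos_neg; field.
Qed.

End FirstModeFourier.

(** * The H^{-1} norm of a first x-mode *)

Definition box_freq (N j : nat) : R := INR j - INR N.

(* The two modes (m, n) = (1, j - N) and (-1, N - j) of [Hm1_box (first_mode z1 z2) N]. *)
Definition hm1_term (N : nat) (z1 z2 : R -> R) (j : nat) : R :=
  (coef_sq (box_freq N j) z1 z2 + coef_sq (- box_freq N j) z1 z2) / (4 * (1 + box_freq N j ^ 2)).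

Definition hm1_partial (N : nat) (z1 z2 : R -> R) : R := sum_n (hm1_term N z1 z2) (2 * N).

Lemma box_freq_IZR N j : box_freq N j = IZR (Z.of_nat j - Z.of_nat N).
Proof. unfold box_freq; rewrite minus_IZR, <- !INR_IZR_INZ; reflexivity. Qed.

Lemma hm1_term_nonneg N z1 z2 j : 0 <= hm1_term N z1 z2 j.
Proof.
  unfold hm1_term; pose proof (coef_sq_nonneg (box_freq N j) z1 z2);
    pose proof (coef_sq_nonneg (- box_freq N j) z1 z2); pose proof (pow2_ge_0 (box_freq N j)).
  apply Rmult_le_pos; [lra|apply Rlt_le, Rinv_0_lt_compat; lra].
Qed.

Lemma hm1_partial_nonneg N z1 z2 : 0 <= hm1_partial N z1 z2.
Proof. apply sum_n_nonneg, hm1_term_nonneg. Qed.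

Lemma hm1_partial_succ N z1 z2 : hm1_partial N z1 z2 <= hm1_partial (S N) z1 z2.
Proof.
  unfold hm1_partial; replace (2 * S N)%nat with (S (S (2 * N))) by lia.
  rewrite sum_Sn, sum_n_shift; unfold plus; simpl.
  rewrite (sum_n_Rext (fun j => hm1_term (S N) z1 z2 (S j)) (hm1_term N z1 z2)).
  - pose proof (hm1_term_nonneg (S N) z1 z2 0);
      pose proof (hm1_term_nonneg (S N) z1 z2 (S (S (N + (N + 0))))).
    replace (2 * N)%nat with (N + (N + 0))%nat by lia; lra.
  - intros j; unfold hm1_term, box_freq; rewrite !S_INR.
    replace (INR j + 1 - (INR N + 1)) with (INR j - INR N) by ring; reflexivity.
Qed.

Lemma Hm1_box_first_mode z1 z2 N : continuous_R z1 -> continuous_R z2 -> (1 <= N)%nat ->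
  Hm1_box (first_mode z1 z2) N = hm1_partial N z1 z2.
Proof.
  intros Hz1 Hz2 HN; unfold Hm1_box.
  rewrite (sum_n_two_terms _ (N - 1) (N + 1) (2 * N)); try lia.
  - replace (Z.of_nat (N - 1) - Z.of_nat N)%Z with (-1)%Z by lia.
    replace (Z.of_nat (N + 1) - Z.of_nat N)%Z with 1%Z by lia.
    unfold hm1_partial; rewrite <- sum_n_Rplus; apply sum_n_Rext; intros j.
    unfold Hm1_term; simpl andb.
    rewrite fourier_sq_first_mode_m1, fourier_sq_first_mode_1, <- box_freq_IZR by auto.
    unfold hm1_term; pose proof (pow2_ge_0 (box_freq N j)); field; lra.
  - intros i Hi1 Hi2; rewrite (sum_n_Rext _ (fun _ => 0)).
    + rewrite sum_n_const, Rmult_0_r; reflexivity.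
    + intros j; unfold Hm1_term; destruct (_ && _)%bool; [reflexivity|].
      rewrite fourier_sq_first_mode_other by (auto; lia); ring.
Qed.

Definition L2sq (z1 z2 : R -> R) : R := RInt (fun y => z1 y ^ 2 + z2 y ^ 2) (- PI) PI.

Lemma L2sq_nonneg z1 z2 : continuous_R z1 -> continuous_R z2 -> 0 <= L2sq z1 z2.
Proof.
  intros Hz1 Hz2; apply (is_RInt_nonneg _ _ (is_RInt_RInt_R (fun y => z1 y ^ 2 + z2 y ^ 2) (- PI) PI
                                                 ltac:(continuous_R_tac))).
  intros; nra.
Qed.

Lemma is_RInt_cos_Zmul (m : Z) :
  is_RInt (fun y => cos (IZR m * y)) (- PI) PI (if Z.eqb m 0 then 2 * PI else 0).
Proof.
  eapply is_RInt_value; [eapply is_RInt_ext_R; [|apply (is_RInt_cos_lin m 0)]|].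
  - intros; cbv beta; rewrite Rplus_0_r; reflexivity.
  - unfold int_cos; destruct (Z.eqb m 0); [rewrite cos_0; ring|reflexivity].
Qed.

Lemma is_RInt_sin_Zmul (m : Z) : is_RInt (fun y => sin (IZR m * y)) (- PI) PI 0.
Proof.
  eapply is_RInt_value; [eapply is_RInt_ext_R; [|apply (is_RInt_sin_lin m 0)]|].
  - intros; cbv beta; rewrite Rplus_0_r; reflexivity.
  - unfold int_sin; destruct (Z.eqb m 0); [rewrite sin_0; ring|reflexivity].
Qed.

Section Bessel.
Variables z1 z2 : R -> R.
Hypothesis Hz1 : continuous_R z1.
Hypothesis Hz2 : continuous_R z2.
Variable nu : nat -> R.
Hypothesis Hnu : forall j k, exists m : Z, nu j - nu k = IZR m /\ (j <> k -> m <> 0%Z).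
Variable M : nat.

Let al j := coef_re (nu j) z1 z2.
Let be j := coef_im (nu j) z1 z2.
(* [w1 + i w2] is the orthogonal projection of [z1 + i z2] on the span of the e^{i nu_j y}. *)
Let w1 y := sum_n (fun j => al j * cos (nu j * y) - be j * sin (nu j * y)) M.
Let w2 y := sum_n (fun j => al j * sin (nu j * y) + be j * cos (nu j * y)) M.
Let S := sum_n (fun j => al j ^ 2 + be j ^ 2) M.

Let is_RInt_bessel_cross : is_RInt (fun y => z1 y * w1 y + z2 y * w2 y) (- PI) PI S.
Proof.
  apply (is_RInt_ext_R (fun y => sum_n (fun j =>
       al j * (z1 y * cos (nu j * y) + z2 y * sin (nu j * y))
     + be j * (z2 y * cos (nu j * y) - z1 y * sin (nu j * y))) M)).
  - intros y _; unfold w1, w2; rewrite <- !sum_n_Rmult_l, <- sum_n_Rplus.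
    apply sum_n_Rext; intros; ring.
  - eapply is_RInt_value; [apply is_RInt_sum|].
    + intros j; apply is_RInt_plus_R; apply is_RInt_scal_R, is_RInt_RInt_R; continuous_R_tac.
    + apply sum_n_Rext; intros j; unfold al, be, coef_re, coef_im; ring.
Qed.

Let is_RInt_bessel_square : is_RInt (fun y => w1 y ^ 2 + w2 y ^ 2) (- PI) PI (2 * PI * S).
Proof.
  apply (is_RInt_ext_R (fun y => sum_n (fun j => sum_n (fun k =>
        (al j * al k + be j * be k) * cos ((nu j - nu k) * y)
      + (al j * be k - be j * al k) * sin ((nu j - nu k) * y)) M) M)).
  - intros y _; unfold w1, w2; simpl pow; rewrite !Rmult_1_r, !sum_n_prod, <- sum_n_Rplus.
    apply sum_n_Rext; intros j; rewrite <- sum_n_Rplus; apply sum_n_Rext; intros k.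
    rewrite Rmult_minus_distr_r, cos_minus, sin_minus; ring.
  - eapply is_RInt_value; [apply (is_RInt_sum _ (fun j => sum_n (fun k =>
        (al j * al k + be j * be k) * (if Nat.eqb k j then 2 * PI else 0)) M))|].
    + intros j; apply is_RInt_sum; intros k.
      destruct (Hnu j k) as [m [Em Hm]]; rewrite Em.
      eapply is_RInt_value; [apply is_RInt_plus_R; apply is_RInt_scal_R;
                             [apply is_RInt_cos_Zmul | apply is_RInt_sin_Zmul]|].
      destruct (Nat.eqb_spec k j).
      * subst; assert (m = 0%Z) by (apply eq_IZR; rewrite <- Em; ring); subst; simpl; ring.
      * rewrite (proj2 (Z.eqb_neq m 0)) by auto; ring.
    + unfold S; rewrite <- sum_n_Rmult_l; apply sum_n_Rext_loc; intros j Hj.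
      rewrite (sum_n_Rext _ (fun k => if Nat.eqb k j then 2 * PI * (al j ^ 2 + be j ^ 2) else 0)).
      * rewrite sum_n_indicator; destruct (Nat.leb_spec j M); [reflexivity|lia].
      * intros k; destruct (Nat.eqb_spec k j); [subst|]; ring.
Qed.

(* Integrate |z - w / (2 PI)|^2 >= 0. *)
Lemma bessel : sum_n (fun j => coef_sq (nu j) z1 z2) M <= 2 * PI * L2sq z1 z2.
Proof.
  pose proof PI_RGT_0.
  pose proof (is_RInt_plus_R _ _ _ _ _ _
    (is_RInt_plus_R _ _ _ _ _ _ (is_RInt_RInt_R (fun y => z1 y ^ 2 + z2 y ^ 2) (- PI) PI
                                   ltac:(continuous_R_tac))
                                (is_RInt_scal_R _ _ _ (- / PI) _ is_RInt_bessel_cross))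
    (is_RInt_scal_R _ _ _ (/ (4 * PI ^ 2)) _ is_RInt_bessel_square)) as Hint.
  apply is_RInt_nonneg in Hint.
  - change (S <= 2 * PI * L2sq z1 z2); unfold L2sq.
    set (I := RInt (fun y => z1 y ^ 2 + z2 y ^ 2) (- PI) PI) in *.
    replace (I + - / PI * S + / (4 * PI ^ 2) * (2 * PI * S)) with ((2 * PI * I - S) / (2 * PI))
      in Hint by (field; lra).
    apply Rmult_le_compat_r with (r := 2 * PI) in Hint; [|lra].
    replace ((2 * PI * I - S) / (2 * PI) * (2 * PI)) with (2 * PI * I - S) in Hint by (field; lra).
    lra.
  - intros y.
    replace (z1 y ^ 2 + z2 y ^ 2 + - / PI * (z1 y * w1 y + z2 y * w2 y)
             + / (4 * PI ^ 2) * (w1 y ^ 2 + w2 y ^ 2))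
      with ((z1 y - w1 y / (2 * PI)) ^ 2 + (z2 y - w2 y / (2 * PI)) ^ 2) by (field; lra).
    apply Rplus_le_le_0_compat; apply pow2_ge_0.
Qed.

End Bessel.

Lemma bessel_box N z1 z2 : continuous_R z1 -> continuous_R z2 ->
  sum_n (fun j => / 4 * coef_sq (box_freq N j) z1 z2 + / 4 * coef_sq (- box_freq N j) z1 z2) (2 * N)
  <= PI * L2sq z1 z2.
Proof.
  intros Hz1 Hz2.
  assert (Hp : forall j k, exists m : Z,
             box_freq N j - box_freq N k = IZR m /\ (j <> k -> m <> 0%Z)).
  { intros j k; exists (Z.of_nat j - Z.of_nat k)%Z.
    split; [unfold box_freq; rewrite minus_IZR, <- !INR_IZR_INZ; ring | lia]. }
  assert (Hm : forall j k, exists m : Z,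
             - box_freq N j - - box_freq N k = IZR m /\ (j <> k -> m <> 0%Z)).
  { intros j k; exists (Z.of_nat k - Z.of_nat j)%Z.
    split; [unfold box_freq; rewrite minus_IZR, <- !INR_IZR_INZ; ring | lia]. }
  pose proof (bessel z1 z2 Hz1 Hz2 (box_freq N) Hp (2 * N)) as B1.
  pose proof (bessel z1 z2 Hz1 Hz2 (fun j => - box_freq N j) Hm (2 * N)) as B2.
  rewrite sum_n_Rplus, !sum_n_Rmult_l; lra.
Qed.

Lemma hm1_partial_le_L2 N z1 z2 : continuous_R z1 -> continuous_R z2 ->
  hm1_partial N z1 z2 <= PI * L2sq z1 z2.
Proof.
  intros Hz1 Hz2; eapply Rle_trans; [|apply bessel_box; auto].
  apply sum_n_le; intros j _; unfold hm1_term.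
  pose proof (coef_sq_nonneg (box_freq N j) z1 z2);
    pose proof (coef_sq_nonneg (- box_freq N j) z1 z2); pose proof (pow2_ge_0 (box_freq N j)).
  unfold Rdiv; rewrite Rinv_mult.
  assert (/ (1 + box_freq N j ^ 2) <= 1) by (rewrite <- Rinv_1; apply Rinv_le_contravar; lra).
  assert (0 <= / (1 + box_freq N j ^ 2)) by (apply Rlt_le, Rinv_0_lt_compat; lra).
  nra.
Qed.

Section Linearity.
Variables z1 z2 w1 w2 : R -> R.
Hypothesis Hz1 : continuous_R z1.
Hypothesis Hz2 : continuous_R z2.
Hypothesis Hw1 : continuous_R w1.
Hypothesis Hw2 : continuous_R w2.

Lemma coef_re_add_scal nu c :
  coef_re nu (fun y => z1 y + c * w1 y) (fun y => z2 y + c * w2 y)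
  = coef_re nu z1 z2 + c * coef_re nu w1 w2.
Proof.
  unfold coef_re.
  rewrite (RInt_ext_R _ (fun y => 1 * (z1 y * cos (nu * y) + z2 y * sin (nu * y))
                                 + c * (w1 y * cos (nu * y) + w2 y * sin (nu * y))))
    by (intros; ring).
  rewrite RInt_lin by continuous_R_tac; ring.
Qed.

Lemma coef_im_add_scal nu c :
  coef_im nu (fun y => z1 y + c * w1 y) (fun y => z2 y + c * w2 y)
  = coef_im nu z1 z2 + c * coef_im nu w1 w2.
Proof.
  unfold coef_im.
  rewrite (RInt_ext_R _ (fun y => 1 * (z2 y * cos (nu * y) - z1 y * sin (nu * y))
                                 + c * (w2 y * cos (nu * y) - w1 y * sin (nu * y))))
    by (intros; ring).
  rewrite RInt_lin by continuous_R_tac; ring.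
Qed.

Lemma hm1_partial_quadratic N : exists B, forall c,
  hm1_partial N (fun y => z1 y + c * w1 y) (fun y => z2 y + c * w2 y)
  = hm1_partial N z1 z2 + 2 * c * B + c ^ 2 * hm1_partial N w1 w2.
Proof.
  exists (sum_n (fun j =>
    (coef_re (box_freq N j) z1 z2 * coef_re (box_freq N j) w1 w2
     + coef_im (box_freq N j) z1 z2 * coef_im (box_freq N j) w1 w2
     + coef_re (- box_freq N j) z1 z2 * coef_re (- box_freq N j) w1 w2
     + coef_im (- box_freq N j) z1 z2 * coef_im (- box_freq N j) w1 w2)
    / (4 * (1 + box_freq N j ^ 2))) (2 * N)).
  intros c; unfold hm1_partial; rewrite <- !sum_n_Rmult_l, <- !sum_n_Rplus.
  apply sum_n_Rext; intros j; unfold hm1_term, coef_sq.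
  rewrite !coef_re_add_scal, !coef_im_add_scal.
  pose proof (pow2_ge_0 (box_freq N j)); field; lra.
Qed.

End Linearity.

(* Nonnegativity in l forces the discriminant condition b^2 <= a c. *)
Lemma sqrt_quadratic_le a b c : 0 <= a -> 0 <= c -> (forall l, 0 <= a + 2 * l * b + l ^ 2 * c) ->
  sqrt (a + 2 * b + c) <= sqrt a + sqrt c.
Proof.
  intros Ha Hc H.
  assert (Hb : b <= sqrt a * sqrt c).
  { destruct (Rle_or_lt b 0) as [Hb|Hb].
    - pose proof (sqrt_pos a); pose proof (sqrt_pos c); nra.
    - destruct (Req_dec c 0) as [->|Hc0].
      + specialize (H (- (a + 1) / (2 * b))).
        replace (a + 2 * (- (a + 1) / (2 * b)) * b + (- (a + 1) / (2 * b)) ^ 2 * 0) with (-1) in H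
          by (field; lra).
        lra.
      + specialize (H (- b / c)).
        replace (a + 2 * (- b / c) * b + (- b / c) ^ 2 * c) with ((a * c - b ^ 2) / c) in H
          by (field; lra).
        assert (0 <= a * c - b ^ 2).
        { apply Rmult_le_reg_r with (/ c); [apply Rinv_0_lt_compat; lra|].
          rewrite Rmult_0_l; apply H. }
        rewrite <- sqrt_mult, <- (sqrt_pow2 b) by lra; apply sqrt_le_1_alt; lra. }
  pose proof (sqrt_pos a); pose proof (sqrt_pos c).
  rewrite <- (sqrt_pow2 (sqrt a + sqrt c)) by lra; apply sqrt_le_1_alt.
  replace ((sqrt a + sqrt c) ^ 2) with (sqrt a ^ 2 + 2 * (sqrt a * sqrt c) + sqrt c ^ 2) by ring.
  rewrite !pow2_sqrt by lra; lra.
Qed.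

Lemma hm1_partial_triangle N z1 z2 w1 w2 :
  continuous_R z1 -> continuous_R z2 -> continuous_R w1 -> continuous_R w2 ->
  sqrt (hm1_partial N (fun y => z1 y + w1 y) (fun y => z2 y + w2 y))
  <= sqrt (hm1_partial N z1 z2) + sqrt (hm1_partial N w1 w2).
Proof.
  intros Hz1 Hz2 Hw1 Hw2; destruct (hm1_partial_quadratic z1 z2 w1 w2 Hz1 Hz2 Hw1 Hw2 N) as [B HB].
  replace (fun y => z1 y + w1 y) with (fun y => z1 y + 1 * w1 y)
    by (apply functional_extensionality; intros; ring).
  replace (fun y => z2 y + w2 y) with (fun y => z2 y + 1 * w2 y)
    by (apply functional_extensionality; intros; ring).
  rewrite HB.
  replace (2 * 1 * B) with (2 * B) by ring; rewrite pow1, Rmult_1_l.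
  apply sqrt_quadratic_le; try apply hm1_partial_nonneg.
  intros l; rewrite <- HB; apply hm1_partial_nonneg.
Qed.

Lemma hm1_partial_scal N z1 z2 c : continuous_R z1 -> continuous_R z2 ->
  hm1_partial N (fun y => c * z1 y) (fun y => c * z2 y) = c ^ 2 * hm1_partial N z1 z2.
Proof.
  intros Hz1 Hz2.
  assert (Hre : forall nu,
             coef_re nu (fun y => c * z1 y) (fun y => c * z2 y) = c * coef_re nu z1 z2).
  { intros nu; unfold coef_re; rewrite <- RInt_scal_R by continuous_R_tac.
    apply RInt_ext_R; intros; ring. }
  assert (Him : forall nu,
             coef_im nu (fun y => c * z1 y) (fun y => c * z2 y) = c * coef_im nu z1 z2).
  { intros nu; unfold coef_im; rewrite <- RInt_scal_R by continuous_R_tac.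
    apply RInt_ext_R; intros; ring. }
  unfold hm1_partial; rewrite <- sum_n_Rmult_l; apply sum_n_Rext; intros j.
  unfold hm1_term, coef_sq; rewrite !Hre, !Him.
  pose proof (pow2_ge_0 (box_freq N j)); field; lra.
Qed.

Section Derivative.
Variables u1 u2 du1 du2 w1 w2 : R -> R.
Hypothesis Hu1 : forall y, is_derive u1 y (du1 y).
Hypothesis Hu2 : forall y, is_derive u2 y (du2 y).
Hypothesis Hdu1 : continuous_R du1.
Hypothesis Hdu2 : continuous_R du2.
Hypothesis Hw1 : continuous_R w1.
Hypothesis Hw2 : continuous_R w2.
Hypothesis Pu1 : u1 PI = u1 (- PI).
Hypothesis Pu2 : u2 PI = u2 (- PI).

Let Hcu1 : continuous_R u1 := ex_derive_continuous_R u1 (fun y => ex_intro _ (du1 y) (Hu1 y)).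
Let Hcu2 : continuous_R u2 := ex_derive_continuous_R u2 (fun y => ex_intro _ (du2 y) (Hu2 y)).

Lemma coef_re_deriv (m : Z) : coef_re (IZR m) du1 du2 = - IZR m * coef_im (IZR m) u1 u2.
Proof.
  set (nu := IZR m); unfold coef_re, coef_im; apply is_RInt_unique.
  set (df := fun y => du1 y * cos (nu * y) - nu * u1 y * sin (nu * y)
                      + du2 y * sin (nu * y) + nu * u2 y * cos (nu * y)).
  assert (HF : is_RInt df (- PI) PI 0).
  { eapply is_RInt_value;
      [apply (is_RInt_derive (V:=R_CompleteNormedModule)
                (fun y => u1 y * cos (nu * y) + u2 y * sin (nu * y)) df)|].
    - intros y _; unfold df; auto_derive.
      + repeat split; auto; [exists (du1 y) | exists (du2 y)]; auto.
      + replace (Derive (fun x => u1 x) y) with (du1 y) by (symmetry; apply is_derive_unique, Hu1).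
        replace (Derive (fun x => u2 x) y) with (du2 y) by (symmetry; apply is_derive_unique, Hu2).
        ring.
    - intros y _; assert (Hc : continuous_R df) by (unfold df; continuous_R_tac); apply Hc.
    - unfold minus, plus, opp; simpl; rewrite Pu1, Pu2.
      replace (nu * - PI) with (- (nu * PI)) by ring.
      rewrite cos_neg, sin_neg; unfold nu; rewrite sin_IZR_PI; ring. }
  eapply is_RInt_value; [eapply is_RInt_ext_R; [|apply (is_RInt_plus_R _ _ _ _ _ _ HF
     (is_RInt_scal_R _ _ _ (- nu) _ (is_RInt_RInt_R
        (fun y => u2 y * cos (nu * y) - u1 y * sin (nu * y)) (- PI) PI
        ltac:(continuous_R_tac))))]|].
  - intros y _; unfold df; ring.
  - ring.
Qed.

Lemma coef_im_deriv (m : Z) : coef_im (IZR m) du1 du2 = IZR m * coef_re (IZR m) u1 u2.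
Proof.
  set (nu := IZR m); unfold coef_re, coef_im; apply is_RInt_unique.
  set (df := fun y => du2 y * cos (nu * y) - nu * u2 y * sin (nu * y)
                      - (du1 y * sin (nu * y) + nu * u1 y * cos (nu * y))).
  assert (HF : is_RInt df (- PI) PI 0).
  { eapply is_RInt_value;
      [apply (is_RInt_derive (V:=R_CompleteNormedModule)
                (fun y => u2 y * cos (nu * y) - u1 y * sin (nu * y)) df)|].
    - intros y _; unfold df; auto_derive.
      + repeat split; auto; [exists (du2 y) | exists (du1 y)]; auto.
      + replace (Derive (fun x => u1 x) y) with (du1 y) by (symmetry; apply is_derive_unique, Hu1).
        replace (Derive (fun x => u2 x) y) with (du2 y) by (symmetry; apply is_derive_unique, Hu2).
        ring.
    - intros y _; assert (Hc : continuous_R df) by (unfold df; continuous_R_tac); apply Hc.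
    - unfold minus, plus, opp; simpl; rewrite Pu1, Pu2.
      replace (nu * - PI) with (- (nu * PI)) by ring.
      rewrite cos_neg, sin_neg; unfold nu; rewrite sin_IZR_PI; ring. }
  eapply is_RInt_value; [eapply is_RInt_ext_R; [|apply (is_RInt_plus_R _ _ _ _ _ _ HF
     (is_RInt_scal_R _ _ _ nu _ (is_RInt_RInt_R
        (fun y => u1 y * cos (nu * y) + u2 y * sin (nu * y)) (- PI) PI
        ltac:(continuous_R_tac))))]|].
  - intros y _; unfold df; ring.
  - ring.
Qed.

Lemma coef_sq_deriv_sub (m : Z) :
  coef_sq (IZR m) (fun y => du1 y - w1 y) (fun y => du2 y - w2 y)
  <= (1 + IZR m ^ 2) * (coef_sq (IZR m) u1 u2 + coef_sq (IZR m) w1 w2).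
Proof.
  replace (fun y => du1 y - w1 y) with (fun y => du1 y + -1 * w1 y)
    by (apply functional_extensionality; intros; ring).
  replace (fun y => du2 y - w2 y) with (fun y => du2 y + -1 * w2 y)
    by (apply functional_extensionality; intros; ring).
  unfold coef_sq; rewrite coef_re_add_scal, coef_im_add_scal, coef_re_deriv, coef_im_deriv by auto.
  set (a := coef_re (IZR m) u1 u2); set (b := coef_im (IZR m) u1 u2).
  set (a' := coef_re (IZR m) w1 w2); set (b' := coef_im (IZR m) w1 w2).
  assert (0 <= (b - IZR m * a') ^ 2) by apply pow2_ge_0.
  assert (0 <= (a + IZR m * b') ^ 2) by apply pow2_ge_0.
  nra.
Qed.

(* The weight 1 / (1 + n^2) of the H^{-1} norm absorbs the factor n^2 created by the derivative. *)
Lemma hm1_partial_deriv_sub N :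
  hm1_partial N (fun y => du1 y - w1 y) (fun y => du2 y - w2 y) <= PI * (L2sq u1 u2 + L2sq w1 w2).
Proof.
  pose proof (bessel_box N u1 u2 Hcu1 Hcu2); pose proof (bessel_box N w1 w2 Hw1 Hw2).
  eapply Rle_trans; [|rewrite Rmult_plus_distr_l; apply Rplus_le_compat; eassumption].
  rewrite <- sum_n_Rplus; apply sum_n_le; intros j _; unfold hm1_term.
  pose proof (coef_sq_deriv_sub (Z.of_nat j - Z.of_nat N)) as D1.
  pose proof (coef_sq_deriv_sub (Z.of_nat N - Z.of_nat j)) as D2.
  rewrite <- box_freq_IZR in D1.
  replace (IZR (Z.of_nat N - Z.of_nat j)) with (- box_freq N j) in D2
    by (rewrite box_freq_IZR, !minus_IZR; ring).
  replace ((- box_freq N j) ^ 2) with (box_freq N j ^ 2) in D2 by ring.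
  pose proof (pow2_ge_0 (box_freq N j)).
  apply Rmult_le_reg_l with (4 * (1 + box_freq N j ^ 2)); [lra|].
  unfold Rdiv; rewrite (Rmult_comm (_ + _)), <- Rmult_assoc, Rinv_r, Rmult_1_l by lra.
  lra.
Qed.

End Derivative.

Lemma Lim_seq_incr_bounded (u : nat -> R) B :
  (forall N, u N <= u (S N)) -> (forall N, u N <= B) ->
  exists l, Lim_seq u = Finite l /\ (forall N, u N <= l) /\
            (forall C, (forall N, u N <= C) -> l <= C).
Proof.
  intros Hm HB.
  pose proof (Lim_seq_correct u (ex_lim_seq_incr u Hm)) as HL.
  assert (LB : forall C, (forall N, u N <= C) -> Rbar_le (Lim_seq u) C).
  { intros C HC; rewrite <- (Lim_seq_const C); apply Lim_seq_le_loc; exists O; auto. }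
  assert (L0 : Rbar_le (u O) (Lim_seq u)).
  { rewrite <- (Lim_seq_const (u O)); apply Lim_seq_le_loc; exists O; intros n _.
    induction n; [lra | specialize (Hm n); lra]. }
  pose proof (LB B HB) as LBB.
  destruct (Lim_seq u) as [l| |] eqn:E; simpl in LBB, L0; try contradiction.
  exists l; split; [reflexivity|split].
  - intros N; apply (is_lim_seq_incr_compare u l); auto.
  - intros C HC; specialize (LB C HC); simpl in LB; auto.
Qed.

Definition hm1 (z1 z2 : R -> R) : R := real (Hm1norm (first_mode z1 z2)).

Section FirstModeNorm.
Variables z1 z2 : R -> R.
Hypothesis Hz1 : continuous_R z1.
Hypothesis Hz2 : continuous_R z2.

Lemma hm1_sup :
  Hm1norm (first_mode z1 z2) = Finite (hm1 z1 z2) /\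
  (forall N, sqrt (hm1_partial N z1 z2) <= hm1 z1 z2) /\
  (forall C, (forall N, sqrt (hm1_partial N z1 z2) <= C) -> hm1 z1 z2 <= C).
Proof.
  assert (B0 : Hm1_box (first_mode z1 z2) 0 = 0).
  { unfold Hm1_box; simpl; rewrite !sum_O; reflexivity. }
  assert (Hbox : forall N, (1 <= N)%nat -> Hm1_box (first_mode z1 z2) N = hm1_partial N z1 z2)
    by (intros; apply Hm1_box_first_mode; auto).
  destruct (Lim_seq_incr_bounded (Hm1_box (first_mode z1 z2)) (PI * L2sq z1 z2))
    as [l [E [Lub Lleast]]].
  - intros [|N].
    + rewrite B0, Hbox by lia; apply hm1_partial_nonneg.
    + rewrite !Hbox by lia; apply hm1_partial_succ.
  - intros [|N].
    + rewrite B0; pose proof PI_RGT_0; pose proof (L2sq_nonneg z1 z2 Hz1 Hz2); nra.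
    + rewrite Hbox by lia; apply hm1_partial_le_L2; auto.
  - assert (Hn : Hm1norm (first_mode z1 z2) = Finite (sqrt l))
      by (unfold Hm1norm, Hm1sq; rewrite E; reflexivity).
    assert (Hpl : forall N, hm1_partial N z1 z2 <= l).
    { intros [|N].
      - apply Rle_trans with (hm1_partial 1 z1 z2); [apply hm1_partial_succ|].
        rewrite <- Hbox by lia; apply Lub.
      - rewrite <- Hbox by lia; apply Lub. }
    unfold hm1; rewrite Hn; simpl; split; [reflexivity|split].
    + intros N; apply sqrt_le_1_alt, Hpl.
    + intros C HC; assert (HC0 : 0 <= C) by (eapply Rle_trans; [apply sqrt_pos|apply (HC O)]).
      rewrite <- (sqrt_pow2 C) by auto; apply sqrt_le_1_alt, Lleast; intros [|N].
      * rewrite B0; nra.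
      * rewrite Hbox by lia.
        rewrite <- (pow2_sqrt (hm1_partial (S N) z1 z2)) by apply hm1_partial_nonneg.
        apply pow_incr; split; [apply sqrt_pos|apply HC].
Qed.

Lemma Hm1norm_first_mode : Hm1norm (first_mode z1 z2) = Finite (hm1 z1 z2).
Proof. apply hm1_sup. Qed.

Lemma hm1_partial_le_hm1 N : sqrt (hm1_partial N z1 z2) <= hm1 z1 z2.
Proof. apply hm1_sup. Qed.

Lemma hm1_le C : (forall N, sqrt (hm1_partial N z1 z2) <= C) -> hm1 z1 z2 <= C.
Proof. apply hm1_sup. Qed.

Lemma hm1_nonneg : 0 <= hm1 z1 z2.
Proof. eapply Rle_trans; [apply sqrt_pos|apply (hm1_partial_le_hm1 O)]. Qed.

Lemma hm1_le_L2 : hm1 z1 z2 <= sqrt (PI * L2sq z1 z2).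
Proof. apply hm1_le; intros N; apply sqrt_le_1_alt, hm1_partial_le_L2; auto. Qed.

End FirstModeNorm.

Lemma hm1_ext z1 z2 w1 w2 :
  (forall y, z1 y = w1 y) -> (forall y, z2 y = w2 y) -> hm1 z1 z2 = hm1 w1 w2.
Proof.
  intros H1 H2; apply functional_extensionality in H1, H2; subst; reflexivity.
Qed.

Lemma hm1_add_le z1 z2 w1 w2 :
  continuous_R z1 -> continuous_R z2 -> continuous_R w1 -> continuous_R w2 ->
  hm1 (fun y => z1 y + w1 y) (fun y => z2 y + w2 y) <= hm1 z1 z2 + hm1 w1 w2.
Proof.
  intros; apply hm1_le; try continuous_R_tac; intros N.
  eapply Rle_trans; [apply hm1_partial_triangle; auto|].
  apply Rplus_le_compat; apply hm1_partial_le_hm1; auto.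
Qed.

Lemma hm1_scal_le c z1 z2 : continuous_R z1 -> continuous_R z2 ->
  hm1 (fun y => c * z1 y) (fun y => c * z2 y) <= Rabs c * hm1 z1 z2.
Proof.
  intros; apply hm1_le; try continuous_R_tac; intros N.
  rewrite hm1_partial_scal, sqrt_mult, <- Rsqr_pow2, sqrt_Rsqr_abs
    by auto using pow2_ge_0, hm1_partial_nonneg.
  apply Rmult_le_compat_l; [apply Rabs_pos|apply hm1_partial_le_hm1; auto].
Qed.

Lemma hm1_deriv_sub_le u1 u2 du1 du2 w1 w2 :
  (forall y, is_derive u1 y (du1 y)) -> (forall y, is_derive u2 y (du2 y)) ->
  continuous_R du1 -> continuous_R du2 -> continuous_R w1 -> continuous_R w2 ->
  u1 PI = u1 (- PI) -> u2 PI = u2 (- PI) ->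
  hm1 (fun y => du1 y - w1 y) (fun y => du2 y - w2 y) <= sqrt (PI * (L2sq u1 u2 + L2sq w1 w2)).
Proof.
  intros; apply hm1_le; try continuous_R_tac; intros N.
  apply sqrt_le_1_alt, hm1_partial_deriv_sub; auto.
Qed.

Lemma H1norm_first_mode z1 z2 : is_C1 z1 -> is_C1 z2 ->
  H1norm (first_mode z1 z2) = sqrt (PI * (2 * L2sq z1 z2 + L2sq (Derive z1) (Derive z2))).
Proof.
  intros [Dz1 Cz1'] [Dz2 Cz2'].
  assert (Cz1 : continuous_R z1) by (apply ex_derive_continuous_R, Dz1).
  assert (Cz2 : continuous_R z2) by (apply ex_derive_continuous_R, Dz2).
  unfold H1norm, integral_T2; apply (f_equal sqrt).
  rewrite (RInt_ext_R _ (fun y => 2 * PI * (z1 y ^ 2 + z2 y ^ 2)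
                                 + PI * (Derive z1 y ^ 2 + Derive z2 y ^ 2))).
  - unfold L2sq; rewrite RInt_lin by continuous_R_tac; ring.
  - intros y; apply is_RInt_unique.
    set (a := z1 y); set (b := z2 y); set (p := Derive z1 y); set (q := Derive z2 y).
    eapply is_RInt_value; [eapply is_RInt_ext_R; [|apply (is_RInt_plus_R _ _ _ _ _ _
        (is_RInt_plus_R _ _ _ _ _ _ (is_RInt_const_R (a ^ 2 + b ^ 2 + (p ^ 2 + q ^ 2) / 2))
           (is_RInt_scal_R _ _ _ ((p ^ 2 - q ^ 2) / 2) _ (is_RInt_cos_lin 2 0)))
        (is_RInt_scal_R _ _ _ (- (p * q)) _ (is_RInt_sin_lin 2 0)))]|].
    + intros x _; cbv beta.
      replace (Derive (fun z => first_mode z1 z2 z y) x) with (- a * sin x - b * cos x)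
        by (symmetry; apply is_derive_unique; unfold first_mode; auto_derive; auto;
            unfold a, b; ring).
      replace (Derive (fun z => first_mode z1 z2 x z) y) with (p * cos x - q * sin x).
      2: { symmetry; apply is_derive_unique; unfold first_mode; auto_derive.
           - repeat split; auto.
           - unfold p, q; change (Derive (fun x => z1 x) y) with (Derive z1 y).
             change (Derive (fun x => z2 x) y) with (Derive z2 y); ring. }
      unfold first_mode; fold a b; rewrite Rplus_0_r, cos_2a, sin_2a.
      pose proof (sin2_cos2 x) as S; unfold Rsqr in S.
      match goal with |- ?l = _ =>
        transitivity (l + (sin x ^ 2 + cos x ^ 2 - 1) * (a ^ 2 + b ^ 2 + (p ^ 2 + q ^ 2) / 2)) end.
      * replace (sin x ^ 2 + cos x ^ 2 - 1) with 0 by (simpl; lra); ring.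
      * simpl; field.
    + unfold int_cos, int_sin; simpl; field.
Qed.

Lemma hm1_le_H1norm z1 z2 : is_C1 z1 -> is_C1 z2 -> hm1 z1 z2 <= H1norm (first_mode z1 z2).
Proof.
  intros Hz1 Hz2; pose proof (is_C1_continuous z1 Hz1); pose proof (is_C1_continuous z2 Hz2).
  rewrite H1norm_first_mode by auto.
  eapply Rle_trans; [apply hm1_le_L2; auto|]; apply sqrt_le_1_alt.
  pose proof PI_RGT_0; pose proof (L2sq_nonneg z1 z2 ltac:(auto) ltac:(auto)).
  assert (0 <= L2sq (Derive z1) (Derive z2)) by (apply L2sq_nonneg; [apply Hz1|apply Hz2]).
  nra.
Qed.

(** * Transport by the shear flow *)

(* Along the characteristic s |-> x + U y (s - t) the solution has zero derivative. *)
Lemma transport_solution (rho : R -> R -> R -> R) (U : R -> R)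
  (Hdiff : forall t x y, exists lt lx, differentiable_pt_lim (fun s z => rho s z y) t x lt lx)
  (Hpde : forall t x y, Derive (fun s => rho s x y) t + U y * Derive (fun z => rho t z y) x = 0) :
  forall t x y, rho t x y = rho 0 (x - U y * t) y.
Proof.
  intros t x y.
  set (g := fun s => rho s (x + U y * (s - t)) y).
  assert (Hg : forall s, derivable_pt_lim g s 0).
  { intros s; destruct (Hdiff s (x + U y * (s - t)) y) as [lt [lx D]].
    destruct (differentiable_pt_lim_unique _ _ _ _ _ D) as [D1 D2].
    pose proof (Hpde s (x + U y * (s - t)) y) as HP; rewrite D1, D2 in HP.
    assert (Hc : derivable_pt_lim (fun s => x + U y * (s - t)) s (U y))
      by (apply is_derive_Reals; auto_derive; auto; ring).
    replace 0 with (lt * 1 + lx * U y) by lra.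
    exact (derivable_pt_lim_comp_2d (fun s z => rho s z y) (fun s => s) _ s lt lx 1 (U y) D
             (derivable_pt_lim_id s) Hc). }
  assert (E : g t = g 0).
  { destruct (MVT_gen g 0 t (fun _ => 0)) as [c [_ Hc]]; [| |lra].
    - intros; apply is_derive_Reals, Hg.
    - intros s _; apply derivable_continuous_pt; exists 0; apply Hg. }
  unfold g in E; replace (x + U y * (t - t)) with x in E by ring.
  replace (x + U y * (0 - t)) with (x - U y * t) in E by ring; exact E.
Qed.

(* [rot1 phi z1 z2 + i rot2 phi z1 z2 = (z1 + i z2) e^{-i phi}]. *)
Definition rot1 (phi z1 z2 : R -> R) (y : R) : R := z1 y * cos (phi y) + z2 y * sin (phi y).
Definition rot2 (phi z1 z2 : R -> R) (y : R) : R := z2 y * cos (phi y) - z1 y * sin (phi y).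

Lemma first_mode_shift phi z1 z2 x y :
  first_mode z1 z2 (x - phi y) y = first_mode (rot1 phi z1 z2) (rot2 phi z1 z2) x y.
Proof. unfold first_mode, rot1, rot2; rewrite cos_minus, sin_minus; ring. Qed.

Lemma transport_first_mode (rho : R -> R -> R -> R) (U z1 z2 : R -> R)
  (Hdiff : forall t x y, exists lt lx, differentiable_pt_lim (fun s z => rho s z y) t x lt lx)
  (Hpde : forall t x y, Derive (fun s => rho s x y) t + U y * Derive (fun z => rho t z y) x = 0) :
  (forall x y, rho 0 x y = first_mode z1 z2 x y) ->
  forall t, rho t = first_mode (rot1 (fun y => U y * t) z1 z2) (rot2 (fun y => U y * t) z1 z2).
Proof.
  intros H0 t; extensionality x; extensionality y.
  rewrite (transport_solution rho U Hdiff Hpde), H0.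
  exact (first_mode_shift (fun y => U y * t) z1 z2 x y).
Qed.

(** * Mixing estimates *)

Definition cos_sin_mean : R := / (2 * PI) * RInt (fun x => cos (sin x)) (- PI) PI.

(* cos (sin x) <= 1, strictly on (0, PI) where sin x > 0. *)
Lemma cos_sin_mean_bounds : 0 <= cos_sin_mean < 1.
Proof.
  pose proof PI_RGT_0; pose proof PI2_1.
  assert (Hc : continuous_R (fun x => cos (sin x))) by continuous_R_tac.
  assert (I0 : RInt (fun x => cos (sin x)) (- PI) 0 <= PI).
  { apply Rle_trans with (RInt (fun _ => 1) (- PI) 0).
    - apply RInt_le; try lra; try (apply ex_RInt_continuous_R; continuous_R_tac).
      intros x _; apply COS_bound.
    - rewrite RInt_const_R; lra. }
  assert (I1 : RInt (fun x => cos (sin x)) 0 PI < PI).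
  { apply Rlt_le_trans with (RInt (fun _ => 1) 0 PI).
    - apply RInt_lt; try lra; [intros; apply continuous_R_const | intros; apply Hc|].
      intros x Hx; pose proof (sin_gt_0 x (proj1 Hx) (proj2 Hx)); pose proof (SIN_bound x).
      rewrite <- cos_0; apply cos_decreasing_1; lra.
    - rewrite RInt_const_R; lra. }
  assert (G : 0 <= RInt (fun x => cos (sin x)) (- PI) PI).
  { apply RInt_ge_0; [lra | apply ex_RInt_continuous_R, Hc|].
    intros x _; pose proof (SIN_bound x); apply cos_ge_0; lra. }
  unfold cos_sin_mean; rewrite <- (RInt_Chasles_R _ (- PI) 0 PI Hc) in *.
  split.
  - apply Rmult_le_pos; [apply Rlt_le, Rinv_0_lt_compat; lra | auto].
  - apply Rmult_lt_reg_l with (2 * PI); [lra|].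
    rewrite <- Rmult_assoc, Rinv_r by lra; lra.
Qed.

Definition phase (K t y : R) : R := sin (K * y) * t.

(* ||rho(t)||_{H^-1} for the transport by U(y) = sin (K y) of rho(0) = first_mode z1 z2. *)
Definition hm1_at (K : R) (z1 z2 : R -> R) (t : R) : R :=
  hm1 (rot1 (phase K t) z1 z2) (rot2 (phase K t) z1 z2).

Lemma continuous_rot1 phi z1 z2 :
  continuous_R phi -> continuous_R z1 -> continuous_R z2 -> continuous_R (rot1 phi z1 z2).
Proof. intros; unfold rot1; continuous_R_tac. Qed.

Lemma continuous_rot2 phi z1 z2 :
  continuous_R phi -> continuous_R z1 -> continuous_R z2 -> continuous_R (rot2 phi z1 z2).
Proof. intros; unfold rot2; continuous_R_tac. Qed.

Lemma continuous_phase K t : continuous_R (phase K t).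
Proof. unfold phase; continuous_R_tac. Qed.

Lemma hm1_rot_zero phi z1 z2 :
  (forall y, phi y = 0) -> hm1 (rot1 phi z1 z2) (rot2 phi z1 z2) = hm1 z1 z2.
Proof. intros H; apply hm1_ext; intros y; unfold rot1, rot2; rewrite H, cos_0, sin_0; ring. Qed.

Lemma hm1_at_0 K z1 z2 : hm1_at K z1 z2 0 = hm1 z1 z2.
Proof. apply hm1_rot_zero; intros y; unfold phase; ring. Qed.

Lemma hm1_at_zero_freq z1 z2 t : hm1_at 0 z1 z2 t = hm1 z1 z2.
Proof. apply hm1_rot_zero; intros y; unfold phase; rewrite Rmult_0_l, sin_0; ring. Qed.

Lemma cos_sin_dist_le a b : Rabs (a - b) <= 1 ->
  (cos a - cos b) ^ 2 + (sin a - sin b) ^ 2 <= (a - b) ^ 2.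
Proof.
  intros Hd; apply Rabs_le_between in Hd.
  replace ((cos a - cos b) ^ 2 + (sin a - sin b) ^ 2) with (2 - 2 * cos (a - b)).
  2: { rewrite cos_minus; pose proof (sin2_cos2 a); pose proof (sin2_cos2 b); unfold Rsqr in *.
       simpl; nra. }
  pose proof PI2_1; destruct (cos_bound (a - b) 0) as [C _]; [lra|lra|].
  unfold cos_approx, cos_term in C; simpl in C; lra.
Qed.

Section Rotation.
Variables z1 z2 : R -> R.
Hypothesis Hz1 : continuous_R z1.
Hypothesis Hz2 : continuous_R z2.
Variable K : R.

Lemma L2sq_rot_diff_le s t : Rabs (t - s) <= 1 ->
  L2sq (fun y => rot1 (phase K t) z1 z2 y - rot1 (phase K s) z1 z2 y)
       (fun y => rot2 (phase K t) z1 z2 y - rot2 (phase K s) z1 z2 y)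
  <= (t - s) ^ 2 * L2sq z1 z2.
Proof.
  intros Hts; pose proof (continuous_phase K t); pose proof (continuous_phase K s).
  pose proof PI_RGT_0; unfold L2sq; rewrite <- RInt_scal_R by continuous_R_tac.
  apply RInt_le; try lra; try (apply ex_RInt_continuous_R; unfold rot1, rot2; continuous_R_tac).
  intros y _; unfold rot1, rot2.
  set (a := phase K t y); set (b := phase K s y).
  replace ((z1 y * cos a + z2 y * sin a - (z1 y * cos b + z2 y * sin b)) ^ 2
           + (z2 y * cos a - z1 y * sin a - (z2 y * cos b - z1 y * sin b)) ^ 2)
    with ((z1 y ^ 2 + z2 y ^ 2) * ((cos a - cos b) ^ 2 + (sin a - sin b) ^ 2)) by ring.
  assert (Hab : a - b = sin (K * y) * (t - s)) by (unfold a, b, phase; ring).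
  pose proof (SIN_bound (K * y)); pose proof (Rabs_pos (t - s)).
  assert (Rabs (a - b) <= 1).
  { rewrite Hab, Rabs_mult; assert (Rabs (sin (K * y)) <= 1) by (apply Rabs_le; lra); nra. }
  assert ((a - b) ^ 2 <= (t - s) ^ 2).
  { rewrite Hab, Rpow_mult_distr; assert (sin (K * y) ^ 2 <= 1) by nra.
    pose proof (pow2_ge_0 (t - s)); nra. }
  pose proof (cos_sin_dist_le a b ltac:(auto)).
  pose proof (pow2_ge_0 (z1 y)); pose proof (pow2_ge_0 (z2 y)).
  nra.
Qed.

Lemma hm1_at_step s t : Rabs (t - s) <= 1 ->
  hm1_at K z1 z2 t <= hm1_at K z1 z2 s + Rabs (t - s) * sqrt (PI * L2sq z1 z2).
Proof.
  intros Hts; pose proof (continuous_phase K t); pose proof (continuous_phase K s).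
  pose proof PI_RGT_0; pose proof (L2sq_nonneg z1 z2 Hz1 Hz2).
  unfold hm1_at.
  rewrite (hm1_ext _ _
    (fun y => rot1 (phase K s) z1 z2 y + (rot1 (phase K t) z1 z2 y - rot1 (phase K s) z1 z2 y))
    (fun y => rot2 (phase K s) z1 z2 y + (rot2 (phase K t) z1 z2 y - rot2 (phase K s) z1 z2 y)))
    by (intros; ring).
  eapply Rle_trans;
    [apply hm1_add_le; try apply continuous_rot1; try apply continuous_rot2; auto;
     unfold rot1, rot2; continuous_R_tac|].
  apply Rplus_le_compat_l.
  eapply Rle_trans; [apply hm1_le_L2; unfold rot1, rot2; continuous_R_tac|].
  replace (Rabs (t - s) * sqrt (PI * L2sq z1 z2)) with (sqrt ((t - s) ^ 2 * (PI * L2sq z1 z2))).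
  - apply sqrt_le_1_alt; pose proof (L2sq_rot_diff_le s t Hts); nra.
  - rewrite sqrt_mult, <- Rsqr_pow2, sqrt_Rsqr_abs by (apply pow2_ge_0 || nra); reflexivity.
Qed.

Lemma hm1_at_continuity : continuity (hm1_at K z1 z2).
Proof.
  apply (lipschitz_continuity _ (sqrt (PI * L2sq z1 z2))); [apply sqrt_pos|].
  intros s t Hts; pose proof (hm1_at_step s t Hts) as H1.
  rewrite Rabs_minus_sym in Hts; pose proof (hm1_at_step t s Hts) as H2.
  rewrite Rabs_minus_sym in H2; apply Rabs_le; lra.
Qed.

End Rotation.

Definition phase_mean (K t : R) : R := / (2 * PI) * RInt (fun y => cos (phase K t y)) (- PI) PI.

Lemma phase_mean_bound K t : Rabs (phase_mean K t) <= 1.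
Proof.
  pose proof PI_RGT_0; pose proof (continuous_phase K t); unfold phase_mean.
  assert (Rabs (RInt (fun y => cos (phase K t y)) (- PI) PI) <= (PI - - PI) * 1).
  { apply abs_RInt_le_const; [lra | apply ex_RInt_continuous_R; continuous_R_tac|].
    intros; apply Rabs_le, COS_bound. }
  rewrite Rabs_mult, Rabs_right by (apply Rle_ge, Rlt_le, Rinv_0_lt_compat; lra).
  apply Rmult_le_reg_l with (2 * PI); [lra|].
  rewrite <- Rmult_assoc, Rinv_r by lra; lra.
Qed.

Lemma phase_mean_1 (k : nat) : (1 <= k)%nat -> phase_mean (INR k) 1 = cos_sin_mean.
Proof.
  intros Hk; unfold phase_mean, cos_sin_mean, phase.
  pose proof (RInt_comp_mul_periodic (fun x => cos (sin x)) k ltac:(continuous_R_tac)) as E.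
  cbv beta in E; rewrite <- E
    by (auto; intros x; rewrite sin_plus, sin_2PI, cos_2PI; f_equal; ring).
  f_equal; apply RInt_ext_R; intros; rewrite Rmult_1_r; reflexivity.
Qed.

Lemma phase_periodic K t y : K <> 0 -> phase K t (y + 2 * PI / K) = phase K t y.
Proof.
  intros HK; unfold phase.
  replace (K * (y + 2 * PI / K)) with (K * y + 2 * PI) by (field; auto).
  rewrite sin_plus, sin_2PI, cos_2PI; ring.
Qed.

Section Primitive.
Variables z1 z2 : R -> R.
Hypothesis Hz1 : is_C1 z1.
Hypothesis Hz2 : is_C1 z2.
Variable k : nat.
Hypothesis Hk : (1 <= k)%nat.
Variable t : R.

(* e^{-i phase} = phase_mean + (r1 + i r2), with a remainder of mean zero. *)
Let K := INR k.
Let r1 (y : R) : R := cos (phase K t y) - phase_mean K t.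
Let r2 (y : R) : R := - sin (phase K t y).
Let G1 (y : R) : R := RInt r1 (- PI) y.
Let G2 (y : R) : R := RInt r2 (- PI) y.

Let K_pos : 0 < K := lt_0_INR k Hk.

Let continuous_r1 : continuous_R r1.
Proof. pose proof (continuous_phase K t); unfold r1; continuous_R_tac. Qed.

Let continuous_r2 : continuous_R r2.
Proof. pose proof (continuous_phase K t); unfold r2; continuous_R_tac. Qed.

Let RInt_r1 : RInt r1 (- PI) PI = 0 :> R.
Proof.
  pose proof PI_RGT_0; pose proof (continuous_phase K t); unfold r1.
  rewrite (RInt_ext_R _ (fun s => 1 * cos (phase K t s) + -1 * (fun _ => phase_mean K t) s))
    by (intros; ring).
  rewrite RInt_lin, RInt_const_R by continuous_R_tac; unfold phase_mean; field; lra.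
Qed.

Let RInt_r2 : RInt r2 (- PI) PI = 0 :> R.
Proof.
  apply RInt_odd; [apply continuous_r2|]; intros y; unfold r2, phase.
  replace (K * - y) with (- (K * y)) by ring; rewrite sin_neg.
  replace (- sin (K * y) * t) with (- (sin (K * y) * t)) by ring; rewrite sin_neg; ring.
Qed.

Lemma primitive_sq_le y : - PI <= y -> G1 y ^ 2 + G2 y ^ 2 <= 144 / K ^ 2.
Proof.
  intros Hy; pose proof K_pos; pose proof PI_RGT_0; pose proof PI_4.
  assert (HL : 0 < 2 * PI / K) by (apply Rdiv_lt_0_compat; lra).
  assert (B1 : Rabs (G1 y) <= 2 * (2 * PI / K) / 2).
  { apply RInt_periodic_mean_zero_bound; auto using continuous_r1.
    - intros s; unfold r1; rewrite phase_periodic by (apply Rgt_not_eq, K_pos); reflexivity.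
    - apply RInt_one_period_zero; auto using continuous_r1, RInt_r1.
      intros s; unfold r1; rewrite phase_periodic by (apply Rgt_not_eq, K_pos); reflexivity.
    - intros s; unfold r1; pose proof (phase_mean_bound K t) as Hm; apply Rabs_le_between in Hm.
      pose proof (COS_bound (phase K t s)); apply Rabs_le; lra. }
  assert (B2 : Rabs (G2 y) <= 1 * (2 * PI / K) / 2).
  { apply RInt_periodic_mean_zero_bound; auto using continuous_r2.
    - intros s; unfold r2; rewrite phase_periodic by (apply Rgt_not_eq, K_pos); reflexivity.
    - apply RInt_one_period_zero; auto using continuous_r2, RInt_r2.
      intros s; unfold r2; rewrite phase_periodic by (apply Rgt_not_eq, K_pos); reflexivity.
    - intros s; unfold r2; rewrite Rabs_Ropp; apply Rabs_le, SIN_bound. }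
  apply Rabs_le_between in B1; apply Rabs_le_between in B2.
  apply Rmult_le_reg_r with (K ^ 2); [nra|].
  replace (144 / K ^ 2 * K ^ 2) with 144 by (field; lra).
  assert (E : (2 * PI / K) ^ 2 * K ^ 2 = 4 * PI ^ 2) by (field; lra).
  assert (G1 y ^ 2 <= (2 * PI / K) ^ 2) by nra.
  assert (G2 y ^ 2 <= (2 * PI / K) ^ 2 / 4) by nra.
  nra.
Qed.

Lemma L2sq_mul_primitive (p q : R -> R) : continuous_R p -> continuous_R q ->
  L2sq (fun y => p y * G1 y - q y * G2 y) (fun y => p y * G2 y + q y * G1 y)
  <= 144 / K ^ 2 * L2sq p q.
Proof.
  intros Hp Hq; pose proof PI_RGT_0; pose proof K_pos.
  assert (HG1 : continuous_R G1)
    by (apply ex_derive_continuous_R; intros y; eexists; apply is_derive_RInt_upper, continuous_r1).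
  assert (HG2 : continuous_R G2)
    by (apply ex_derive_continuous_R; intros y; eexists; apply is_derive_RInt_upper, continuous_r2).
  unfold L2sq; rewrite <- RInt_scal_R by continuous_R_tac.
  apply RInt_le; try lra; try (apply ex_RInt_continuous_R; continuous_R_tac).
  intros x Hx; pose proof (primitive_sq_le x ltac:(lra)).
  replace ((p x * G1 x - q x * G2 x) ^ 2 + (p x * G2 x + q x * G1 x) ^ 2)
    with ((p x ^ 2 + q x ^ 2) * (G1 x ^ 2 + G2 x ^ 2)) by ring.
  assert (0 <= p x ^ 2 + q x ^ 2) by nra; nra.
Qed.

Let L2sq_primitive_parts_le :
  sqrt (PI * (L2sq (fun y => z1 y * G1 y - z2 y * G2 y) (fun y => z1 y * G2 y + z2 y * G1 y)
              + L2sq (fun y => Derive z1 y * G1 y - Derive z2 y * G2 y)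
                     (fun y => Derive z1 y * G2 y + Derive z2 y * G1 y)))
  <= 12 / K * H1norm (first_mode z1 z2).
Proof.
  pose proof Hz1 as [_ Cz1']; pose proof Hz2 as [_ Cz2'].
  pose proof (is_C1_continuous z1 Hz1) as Cz1; pose proof (is_C1_continuous z2 Hz2) as Cz2.
  pose proof K_pos; pose proof PI_RGT_0.
  rewrite H1norm_first_mode by auto.
  pose proof (L2sq_mul_primitive z1 z2 Cz1 Cz2).
  pose proof (L2sq_mul_primitive (Derive z1) (Derive z2) Cz1' Cz2').
  pose proof (L2sq_nonneg z1 z2 Cz1 Cz2).
  pose proof (L2sq_nonneg (Derive z1) (Derive z2) Cz1' Cz2').
  replace (12 / K) with (sqrt ((12 / K) ^ 2)) by (apply sqrt_pow2, Rlt_le, Rdiv_lt_0_compat; lra).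
  replace ((12 / K) ^ 2) with (144 / K ^ 2) by (field; lra).
  assert (0 <= 144 / K ^ 2) by (apply Rlt_le, Rdiv_lt_0_compat; nra).
  rewrite <- sqrt_mult by nra; apply sqrt_le_1_alt.
  apply Rle_trans
    with (PI * (144 / K ^ 2 * L2sq z1 z2 + 144 / K ^ 2 * L2sq (Derive z1) (Derive z2))).
  - apply Rmult_le_compat_l; [lra | apply Rplus_le_compat; assumption].
  - assert (0 <= 144 / K ^ 2 * PI * L2sq z1 z2) by (apply Rmult_le_pos; [apply Rmult_le_pos|]; lra).
    lra.
Qed.

(* z e^{-i phase} = phase_mean z + (z G)' - z' G, and G = O(1/K). *)
Lemma hm1_at_le :
  hm1_at K z1 z2 t <= Rabs (phase_mean K t) * hm1 z1 z2 + 12 / K * H1norm (first_mode z1 z2).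
Proof.
  pose proof Hz1 as [Dz1 Cz1']; pose proof Hz2 as [Dz2 Cz2'].
  pose proof (is_C1_continuous z1 Hz1) as Cz1; pose proof (is_C1_continuous z2 Hz2) as Cz2.
  pose proof continuous_r1; pose proof continuous_r2.
  assert (dG1 : forall y, is_derive G1 y (r1 y)) by (intros; apply is_derive_RInt_upper; auto).
  assert (dG2 : forall y, is_derive G2 y (r2 y)) by (intros; apply is_derive_RInt_upper; auto).
  assert (HG1 : continuous_R G1) by (apply ex_derive_continuous_R; intros y; eexists; apply dG1).
  assert (HG2 : continuous_R G2) by (apply ex_derive_continuous_R; intros y; eexists; apply dG2).
  set (a := phase_mean K t).
  set (du1 y := Derive z1 y * G1 y + z1 y * r1 y - (Derive z2 y * G2 y + z2 y * r2 y)).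
  set (du2 y := Derive z1 y * G2 y + z1 y * r2 y + (Derive z2 y * G1 y + z2 y * r1 y)).
  assert (Hu1 : forall y, is_derive (fun y => z1 y * G1 y - z2 y * G2 y) y (du1 y)).
  { intros y; apply is_derive_Rminus; apply is_derive_Rmult; auto using Derive_correct. }
  assert (Hu2 : forall y, is_derive (fun y => z1 y * G2 y + z2 y * G1 y) y (du2 y)).
  { intros y; apply is_derive_Rplus; apply is_derive_Rmult; auto using Derive_correct. }
  unfold hm1_at.
  rewrite (hm1_ext _ _
    (fun y => a * z1 y + (du1 y - (Derive z1 y * G1 y - Derive z2 y * G2 y)))
    (fun y => a * z2 y + (du2 y - (Derive z1 y * G2 y + Derive z2 y * G1 y))))
    by (intros; unfold rot1, rot2, du1, du2, r1, r2, a; ring).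
  eapply Rle_trans; [apply hm1_add_le; unfold du1, du2; continuous_R_tac|].
  apply Rplus_le_compat; [apply hm1_scal_le; auto|].
  assert (Hends : G1 PI = 0 /\ G2 PI = 0 /\ G1 (- PI) = 0 /\ G2 (- PI) = 0).
  { unfold G1, G2; rewrite RInt_r1, RInt_r2, !RInt_point; repeat split; reflexivity. }
  destruct Hends as (E1 & E2 & E3 & E4).
  eapply Rle_trans; [apply hm1_deriv_sub_le; eauto; try (unfold du1, du2; continuous_R_tac);
                     rewrite E1, E2, E3, E4, !Rmult_0_r; reflexivity|].
  apply L2sq_primitive_parts_le.
Qed.

End Primitive.

Section LargeFrequency.
Variables z1 z2 : R -> R.
Hypothesis Hz1 : is_C1 z1.
Hypothesis Hz2 : is_C1 z2.
Variable k : nat.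
Hypothesis Hk : (1 <= k)%nat.
Hypothesis Hk_large :
  36 / (1 - cos_sin_mean) * (H1norm (first_mode z1 z2) / hm1 z1 z2) <= INR k.
Hypothesis Hpos : 0 < hm1 z1 z2.

Lemma hm1_at_le_large_freq :
  forall t, hm1_at (INR k) z1 z2 t
            <= (Rabs (phase_mean (INR k) t) + (1 - cos_sin_mean) / 3) * hm1 z1 z2.
Proof.
  intros t; pose proof cos_sin_mean_bounds; assert (HK : 0 < INR k) by (apply lt_0_INR; lia).
  assert (Herr : 12 / INR k * H1norm (first_mode z1 z2) <= (1 - cos_sin_mean) / 3 * hm1 z1 z2).
  { apply Rmult_le_compat_r with (r := (1 - cos_sin_mean) * hm1 z1 z2 / (3 * INR k)) in Hk_large;
      [|apply Rlt_le, Rdiv_lt_0_compat; nra].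
    replace (36 / (1 - cos_sin_mean) * (H1norm (first_mode z1 z2) / hm1 z1 z2)
             * ((1 - cos_sin_mean) * hm1 z1 z2 / (3 * INR k)))
      with (12 / INR k * H1norm (first_mode z1 z2)) in Hk_large by (field; lra).
    replace (INR k * ((1 - cos_sin_mean) * hm1 z1 z2 / (3 * INR k)))
      with ((1 - cos_sin_mean) / 3 * hm1 z1 z2) in Hk_large by (field; lra).
    exact Hk_large. }
  pose proof (hm1_at_le z1 z2 Hz1 Hz2 k Hk t); lra.
Qed.

Lemma hm1_at_estimates :
  (forall t, hm1_at (INR k) z1 z2 t <= 2 * hm1 z1 z2) /\
  hm1_at (INR k) z1 z2 1 <= (2 * cos_sin_mean + 1) / 3 * hm1 z1 z2 /\
  (exists t0, 0 < t0 < 1 /\ hm1_at (INR k) z1 z2 t0 = (cos_sin_mean + 2) / 3 * hm1 z1 z2).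
Proof.
  pose proof cos_sin_mean_bounds.
  assert (H1 : hm1_at (INR k) z1 z2 1 <= (2 * cos_sin_mean + 1) / 3 * hm1 z1 z2).
  { pose proof (hm1_at_le_large_freq 1) as E; rewrite phase_mean_1, Rabs_pos_eq in E by (auto; lra).
    lra. }
  split; [|split; [exact H1|]].
  - intros t; pose proof (hm1_at_le_large_freq t); pose proof (phase_mean_bound (INR k) t); nra.
  - apply IVT_interior; [lra | apply hm1_at_continuity; apply is_C1_continuous; auto|].
    rewrite hm1_at_0; nra.
Qed.

End LargeFrequency.

(* If [hm1 z1 z2 = 0], dividing by it gives 0 ([Rinv 0 = 0]): then [k0 = 0] and nothing moves. *)
Lemma hm1_at_estimates_ceilZ z1 z2 (k0 : Z) : is_C1 z1 -> is_C1 z2 ->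
  k0 = ceilZ (36 / (1 - cos_sin_mean) * (H1norm (first_mode z1 z2) / hm1 z1 z2)) ->
  (forall t, hm1_at (IZR k0) z1 z2 t <= 2 * hm1 z1 z2) /\
  hm1_at (IZR k0) z1 z2 1 <= (2 * cos_sin_mean + 1) / 3 * hm1 z1 z2 /\
  (exists t0, 0 < t0 < 1 /\ hm1_at (IZR k0) z1 z2 t0 = (cos_sin_mean + 2) / 3 * hm1 z1 z2).
Proof.
  intros Hz1 Hz2 Hk0; pose proof cos_sin_mean_bounds.
  pose proof (hm1_nonneg z1 z2 (is_C1_continuous z1 Hz1) (is_C1_continuous z2 Hz2)).
  destruct (Req_dec (hm1 z1 z2) 0) as [Hzero|Hnz].
  - assert (Hk00 : k0 = 0%Z)
      by (rewrite Hk0, Hzero; unfold Rdiv; rewrite Rinv_0, !Rmult_0_r; apply ceilZ_0).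
    assert (Hst : forall t, hm1_at (IZR k0) z1 z2 t = 0)
      by (intros t; rewrite Hk00, hm1_at_zero_freq; exact Hzero).
    rewrite Hzero, !Hst; split; [intros; rewrite Hst; lra | split; [lra | exists (1 / 2)]].
    rewrite Hst; split; [lra | ring].
  - pose proof (hm1_le_H1norm z1 z2 Hz1 Hz2).
    destruct (ceilZ_pos_nat (36 / (1 - cos_sin_mean) * (H1norm (first_mode z1 z2) / hm1 z1 z2)))
      as [k [Hk Ek]].
    { apply Rmult_lt_0_compat; apply Rdiv_lt_0_compat; lra. }
    rewrite Hk0, Ek; apply hm1_at_estimates; [exact Hz1 | exact Hz2 | exact Hk | | lra].
    rewrite <- Ek; apply ceilZ_ge.
Qed.

Theorem lemma3p6
  (f0 g0 : R -> R)
  (Hf0 : smooth f0) (Hg0 : smooth g0)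
  (Pf0 : periodic2pi f0) (Pg0 : periodic2pi g0)
  (Hnz : exists y, f0 y <> 0 \/ g0 y <> 0)
  (rho0 : R -> R -> R)
  (Hrho0 : forall x y, rho0 x y = f0 y * sin x + g0 y * cos x)
  (A : R)
  (HA : A = / (2 * PI) * RInt (fun x => cos (sin x)) (- PI) PI)
  (k0 : Z)
  (Hk0 : k0 = ceilZ (36 / (1 - Rabs A) * (H1norm rho0 / real (Hm1norm rho0))))
  (U : R -> R)
  (HU : forall y, U y = sin (IZR k0 * y))
  (rho : R -> R -> R -> R)
  (Hinit : forall x y, rho 0 x y = rho0 x y)
  (Hdiff : forall t x y, exists lt lx,
      differentiable_pt_lim (fun s z => rho s z y) t x lt lx)
  (Hpde : forall t x y,
      Derive (fun s => rho s x y) t + U y * Derive (fun z => rho t z y) x = 0) :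
  (forall t, 0 <= t <= 1 ->
     Rbar_le (Hm1norm (rho t)) (Rbar_mult 2 (Hm1norm (rho 0)))) /\
  Rbar_le (Hm1norm (rho 1))
          (Rbar_mult ((2 * Rabs A + 1) / 3) (Hm1norm (rho 0))) /\
  (exists t0, 0 < t0 < 1 /\
     Hm1norm (rho t0) = Rbar_mult ((Rabs A + 2) / 3) (Hm1norm (rho 0))).
Proof.
  set (mf0 := fun y => - f0 y).
  assert (Hz1 : is_C1 g0) by (apply smooth_is_C1, Hg0).
  assert (Hz2 : is_C1 mf0) by (apply is_C1_opp, smooth_is_C1, Hf0).
  pose proof (is_C1_continuous g0 Hz1); pose proof (is_C1_continuous mf0 Hz2).
  assert (E0 : rho0 = first_mode g0 mf0).
  { extensionality x; extensionality y; rewrite Hrho0; unfold first_mode, mf0; ring. }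
  assert (Hrho : forall t, Hm1norm (rho t) = Finite (hm1_at (IZR k0) g0 mf0 t)).
  { intros t; rewrite (transport_first_mode rho U g0 mf0 Hdiff Hpde)
      by (intros; rewrite Hinit, E0; auto).
    replace (fun y => U y * t) with (phase (IZR k0) t)
      by (extensionality y; unfold phase; rewrite HU; reflexivity).
    apply Hm1norm_first_mode; [apply continuous_rot1 | apply continuous_rot2];
      auto using continuous_phase. }
  subst A; fold cos_sin_mean in *; rewrite E0 in Hk0.
  rewrite Rabs_pos_eq in * by apply cos_sin_mean_bounds.
  destruct (hm1_at_estimates_ceilZ g0 mf0 k0 Hz1 Hz2 Hk0) as (B1 & B2 & t0 & Ht0 & B3).
  rewrite !Hrho, hm1_at_0; simpl; split; [|split].
  - intros t _; rewrite Hrho; apply B1.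
  - exact B2.
  - exists t0; split; [exact Ht0|]; rewrite Hrho, B3; reflexivity.
Qed.
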